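(* Let $(\varGamma,C)$ be a split-step SUSYQW (the coin need not be anisotropic). Define the operator on $\ell^2(\mathbb Z)\oplus\ell^2(\mathbb Z)$ \[ \epsilon=\frac{1}{\sqrt2}\begin{pmatrix}\sqrt{1+p} & -\sqrt{1-p}\\ \sqrt{1-p}\,e^{-i\theta}L^* & \sqrt{1+p}\,e^{-i\theta}L^*\end{pmatrix} \] and operators $Q_{\epsilon_\pm}$ on $\ell^2(\mathbb Z)$ by \[ -2iQ_{\epsilon_\pm}=(1\pm p)e^{i\theta}Lb-(1\mp p)e^{-i\theta}\,\overline{b}\,L^*\pm|q|\big(a_2(\cdot+1)-a_1\big), \] where products denote composition with the multiplication operators by $b$, $\overline b$, and by the sequences $a_2(\cdot+1)=(a_2(x+1))_{x}$ and $a_1$. Then $\epsilon$ is unitary and \[ \epsilon^*Q\epsilon=\begin{pmatrix}0 & Q_{\epsilon_-}\\ Q_{\epsilon_+} & 0\end{pmatrix} \] with respect to $\mathcal H=\ell^2(\mathbb Z)\oplus\ell^2(\mathbb Z)$. Moreover, $(\varGamma,C)$ is Fredholm if and only if $Q_{\epsilon_+}$ is a Fredholm operator, and in that case \[ \operatorname{ind}(\varGamma,C)=\operatorname{ind}Q_{\epsilon_+}=\dim\ker Q_{\epsilon_+}-\dim\ker Q_{\epsilon_-}. \]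
   Context: Let $\mathcal H=\ell^2(\mathbb Z,\mathbb C^2)\cong\ell^2(\mathbb Z)\oplus\ell^2(\mathbb Z)$, $L$ the left shift $(L\Psi)(x)=\Psi(x+1)$ on $\ell^2(\mathbb Z)$. A split-step SUSYQW is the pair $\varGamma=\begin{pmatrix} p & qL\\ \overline{q}L^* & -p\end{pmatrix}$, $C=\begin{pmatrix} a_1 & \overline{b}\\ b & a_2\end{pmatrix}$ with $p\in\mathbb R$, $q\in\mathbb C\setminus\{0\}$, $p^2+|q|^2=1$, $\theta=\operatorname{Arg}q$, real sequences $a_1,a_2$ and complex sequence $b$ on $\mathbb Z$ (as multiplication operators) with $a_j(x)^2+|b(x)|^2=1$ and $b(x)(a_1(x)+a_2(x))=0$ for all $x$. $Q=[\varGamma,C]/(2i)$, $H=Q^2$, $\mathcal H_\pm=\ker(\varGamma\mp1)$, $Q_+=Q|_{\mathcal H_+}:\mathcal H_+\to\mathcal H_-$, $H_\pm=H|_{\mathcal H_\pm}$. $(\varGamma,C)$ is Fredholm if $Q_+$ is Fredholm; $\operatorname{ind}(\varGamma,C)=\dim\ker H_+-\dim\ker H_-$. *)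

From Stdlib Require Import Reals ZArith List.
Set Implicit Arguments.
Open Scope R_scope.

Record Cx := mkCx { cre : R; cim : R }.
Definition C0 : Cx := mkCx 0 0.
Definition RtoC (r : R) : Cx := mkCx r 0.
Definition Ci : Cx := mkCx 0 1.
Definition Cadd (z w : Cx) : Cx := mkCx (cre z + cre w) (cim z + cim w).
Definition Cmul (z w : Cx) : Cx :=
  mkCx (cre z * cre w - cim z * cim w) (cre z * cim w + cim z * cre w).
Definition Cconj (z : Cx) : Cx := mkCx (cre z) (- cim z).
Definition Cnorm2 (z : Cx) : R := cre z * cre z + cim z * cim z.
Definition Cmod (z : Cx) : R := sqrt (Cnorm2 z).
Definition Cinv (z : Cx) : Cx := mkCx (cre z / Cnorm2 z) (- cim z / Cnorm2 z).
Definition Cexpi (t : R) : Cx := mkCx (cos t) (sin t).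
Definition Arg_is (z : Cx) (theta : R) : Prop :=
  z = Cmul (RtoC (Cmod z)) (Cexpi theta) /\ - PI < theta <= PI.

Definition Seq := Z -> Cx.
Definition sadd (f g : Seq) : Seq := fun x => Cadd (f x) (g x).
Definition ssc (c : Cx) (f : Seq) : Seq := fun x => Cmul c (f x).
Definition szero : Seq := fun _ => C0.
Definition ssub (f g : Seq) : Seq := sadd f (ssc (RtoC (-1)) g).
Definition smul (m : Z -> Cx) (f : Seq) : Seq := fun x => Cmul (m x) (f x).
Definition Lsh (f : Seq) : Seq := fun x => f (x + 1)%Z.
Definition Lsh_adj (f : Seq) : Seq := fun x => f (x - 1)%Z.

Fixpoint psumZ (g : Z -> R) (N : nat) : R :=
  match N with
  | O => g 0%Z
  | S n => psumZ g n + g (Z.of_nat (S n)) + g (- Z.of_nat (S n))%Z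
  end.
Fixpoint psumZC (g : Z -> Cx) (N : nat) : Cx :=
  match N with
  | O => g 0%Z
  | S n => Cadd (Cadd (psumZC g n) (g (Z.of_nat (S n)))) (g (- Z.of_nat (S n))%Z)
  end.

Record NSpace := {
  vT :> Type;
  vadd : vT -> vT -> vT;
  vsc : Cx -> vT -> vT;
  vzero : vT;
  pnorm2 : vT -> nat -> R  (* partial sums of the squared l^2 norm *)
}.
Arguments vadd {n}. Arguments vsc {n}. Arguments vzero {n}. Arguments pnorm2 {n}.

Definition pn1 (f : Seq) (N : nat) : R := psumZ (fun x => Cnorm2 (f x)) N.
Definition Sp1 : NSpace := {| vT := Seq; vadd := sadd; vsc := ssc; vzero := szero;
                               pnorm2 := pn1 |}.
Definition Seq2 := (Seq * Seq)%type.
Definition Sp2 : NSpace :=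
  {| vT := Seq2;
     vadd := fun f g => (sadd (fst f) (fst g), sadd (snd f) (snd g));
     vsc := fun c f => (ssc c (fst f), ssc c (snd f));
     vzero := (szero, szero);
     pnorm2 := fun f N => pn1 (fst f) N + pn1 (snd f) N |}.

Section Generic.
Context {V : NSpace}.

Definition vsub (f g : V) : V := vadd f (vsc (RtoC (-1)) g).
Definition sumsq_le (f : V) (r : R) : Prop := forall N, pnorm2 f N <= r.
Definition l2 (f : V) : Prop := exists r, sumsq_le f r.
Definition l2_conv (gs : nat -> V) (g : V) : Prop :=
  forall eps, eps > 0 -> exists K, forall k, (K <= k)%nat -> sumsq_le (vsub (gs k) g) eps.
Definition closed_set (P : V -> Prop) : Prop :=
  forall (gs : nat -> V) (g : V), (forall k, P (gs k)) -> l2 g -> l2_conv gs g -> P g.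

Fixpoint lincomb (cs : list Cx) (vs : list V) : V :=
  match cs, vs with
  | c :: cs', v :: vs' => vadd (vsc c v) (lincomb cs' vs')
  | _, _ => vzero
  end.
Definition lin_indep (vs : list V) : Prop :=
  forall cs, length cs = length vs -> lincomb cs vs = vzero -> Forall (fun c => c = C0) cs.
Definition dim_is (P : V -> Prop) (n : nat) : Prop :=
  exists vs : list V, length vs = n /\ Forall P vs /\ lin_indep vs /\
    (forall f, P f -> exists cs, length cs = n /\ f = lincomb cs vs).
(* dim (S / P) = n, for a subspace P of the subspace S *)
Definition codim_is (P S : V -> Prop) (n : nat) : Prop :=
  exists vs : list V, length vs = n /\ Forall S vs /\
    (forall cs, length cs = n -> P (lincomb cs vs) -> Forall (fun c => c = C0) cs) /\
    (forall g, S g -> exists cs r, length cs = n /\ P r /\ g = vadd r (lincomb cs vs)).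

End Generic.
Definition kernel {V W : NSpace} (dom : V -> Prop) (T : V -> W) : V -> Prop :=
  fun f => dom f /\ T f = vzero.
Definition range {V W : NSpace} (dom : V -> Prop) (T : V -> W) : W -> Prop :=
  fun g => exists f, dom f /\ g = T f.
Definition bounded_on {V W : NSpace} (dom : V -> Prop) (T : V -> W) : Prop :=
  exists M : R, forall f r, dom f -> sumsq_le f r -> sumsq_le (T f) (M * r).
Definition Fredholm {V W : NSpace} (dom : V -> Prop) (cod : W -> Prop) (T : V -> W) : Prop :=
  (forall f, dom f -> cod (T f)) /\ bounded_on dom T /\
  (exists n, dim_is (kernel dom T) n) /\ closed_set (range dom T) /\
  (exists n, codim_is (range dom T) cod n).
Definition index_is {V W : NSpace} (dom : V -> Prop) (cod : W -> Prop) (T : V -> W) (k : Z) : Prop :=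
  exists n c, dim_is (kernel dom T) n /\ codim_is (range dom T) cod c /\
    k = (Z.of_nat n - Z.of_nat c)%Z.

Definition inner_is (f g : Sp2) (z : Cx) : Prop :=
  let s := fun N => psumZC (fun x => Cadd (Cmul (fst f x) (Cconj (fst g x)))
                                          (Cmul (snd f x) (Cconj (snd g x)))) N in
  Un_cv (fun N => cre (s N)) (cre z) /\ Un_cv (fun N => cim (s N)) (cim z).

Definition unitary (U : Sp2 -> Sp2) : Prop :=
  (forall c (f g : Sp2), U (vadd (vsc c f) g) = vadd (vsc c (U f)) (U g)) /\
  (forall f : Sp2, l2 f -> l2 (U f)) /\
  (forall g : Sp2, l2 g -> exists f, l2 f /\ U f = g) /\
  (forall (f g : Sp2) z, l2 f -> l2 g -> inner_is f g z -> inner_is (U f) (U g) z).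

Definition Gam (p : R) (q : Cx) (f : Sp2) : Sp2 :=
  (sadd (ssc (RtoC p) (fst f)) (ssc q (Lsh (snd f))),
   ssub (ssc (Cconj q) (Lsh_adj (fst f))) (ssc (RtoC p) (snd f))).
Definition Coin (a1 a2 : Z -> R) (b : Z -> Cx) (f : Sp2) : Sp2 :=
  (sadd (smul (fun x => RtoC (a1 x)) (fst f)) (smul (fun x => Cconj (b x)) (snd f)),
   sadd (smul b (fst f)) (smul (fun x => RtoC (a2 x)) (snd f))).
Definition Qop (p : R) (q : Cx) (a1 a2 : Z -> R) (b : Z -> Cx) (f : Sp2) : Sp2 :=
  vsc (Cinv (Cmul (RtoC 2) Ci))
      (vsub (Gam p q (Coin a1 a2 b f)) (Coin a1 a2 b (Gam p q f))).
Definition Hplus (p : R) (q : Cx) (f : Sp2) : Prop := l2 f /\ Gam p q f = f.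
Definition Hminus (p : R) (q : Cx) (f : Sp2) : Prop :=
  l2 f /\ Gam p q f = vsc (RtoC (-1)) f.
Definition SUSY_Fredholm p q a1 a2 b : Prop :=
  Fredholm (Hplus p q) (Hminus p q) (Qop p q a1 a2 b).
(* ker H_+ and ker H_-, with H = Q^2 *)
Definition kerHplus p q a1 a2 b (f : Sp2) : Prop :=
  Hplus p q f /\ Qop p q a1 a2 b (Qop p q a1 a2 b f) = vzero.
Definition kerHminus p q a1 a2 b (f : Sp2) : Prop :=
  Hminus p q f /\ Qop p q a1 a2 b (Qop p q a1 a2 b f) = vzero.

Definition epsop (p theta : R) (f : Sp2) : Sp2 :=
  let s := RtoC (/ sqrt 2) in
  let cp := RtoC (sqrt (1 + p)) in
  let cm := RtoC (sqrt (1 - p)) in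
  let e := Cexpi (- theta) in
  (ssc s (ssub (ssc cp (fst f)) (ssc cm (snd f))),
   ssc s (sadd (ssc (Cmul cm e) (Lsh_adj (fst f))) (ssc (Cmul cp e) (Lsh_adj (snd f))))).

(* Q_{eps_+} (sg = 1) and Q_{eps_-} (sg = -1):
   -2i Q = (1 + sg p) e^{i theta} L b - (1 - sg p) e^{-i theta} conj(b) L^*
           + sg |q| (a2(.+1) - a1) *)
Definition Qeps (sg p : R) (q : Cx) (theta : R) (a1 a2 : Z -> R) (b : Z -> Cx) (f : Seq) : Seq :=
  ssc (Cinv (Cmul (RtoC (-2)) Ci))
    (sadd (ssub (ssc (Cmul (RtoC (1 + sg * p)) (Cexpi theta)) (Lsh (smul b f)))
                (ssc (Cmul (RtoC (1 - sg * p)) (Cexpi (- theta)))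
                     (smul (fun x => Cconj (b x)) (Lsh_adj f))))
          (ssc (RtoC (sg * Cmod q)) (smul (fun x => RtoC (a2 (x + 1)%Z - a1 x)) f))).
Definition Qeps_p p q theta a1 a2 b : Sp1 -> Sp1 := Qeps 1 p q theta a1 a2 b.
Definition Qeps_m p q theta a1 a2 b : Sp1 -> Sp1 := Qeps (-1) p q theta a1 a2 b.
Definition Qblock p q theta a1 a2 b (f : Sp2) : Sp2 :=
  (Qeps_m p q theta a1 a2 b (snd f), Qeps_p p q theta a1 a2 b (fst f)).

(* [eps] is a unitary change of basis adapted to the grading: pointwise algebra gives
   [Gamma eps = eps diag(1, -1)] and [Q eps = eps [[0, Qeps_-], [Qeps_+, 0]]], so [eps]
   maps [l2 (+) 0] onto [H_+] and [0 (+) l2] onto [H_-] isometrically and intertwines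
   [Q_+ : H_+ -> H_-] with [Qeps_+].  Fredholmness and the dimensions of kernels and
   cokernels are invariant under such identifications.  Finally [Qeps_-] is the adjoint
   of [Qeps_+], so the projection theorem identifies the cokernel of [Qeps_+] with
   [ker Qeps_-], and on [H_+] and [H_-] the kernels of [H = Q^2] and of [Q] coincide. *)

From Pilot Require Import Defs.
From Stdlib Require Import Reals ZArith List Lra Lia Psatz FunctionalExtensionality ClassicalEpsilon.
Open Scope R_scope.

Lemma Cx_ext (z w : Cx) : cre z = cre w -> cim z = cim w -> z = w.
Proof. destruct z, w; simpl; intros; subst; reflexivity. Qed.

Lemma Seq_ext (f g : Seq) : (forall x, f x = g x) -> f = g.
Proof. apply functional_extensionality. Qed.

Lemma Seq2_ext (u v : Seq2) :
  (forall x, fst u x = fst v x) -> (forall x, snd u x = snd v x) -> u = v.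
Proof. destruct u, v; simpl; intros; f_equal; apply Seq_ext; auto. Qed.

Lemma Cnorm2_ge0 z : 0 <= Cnorm2 z.
Proof. unfold Cnorm2; nra. Qed.

Lemma Cnorm2_eq0 z : Cnorm2 z = 0 -> z = C0.
Proof. unfold Cnorm2; intro H; apply Cx_ext; simpl; nra. Qed.

Lemma Cnorm2_mul z w : Cnorm2 (Cmul z w) = Cnorm2 z * Cnorm2 w.
Proof. unfold Cnorm2; simpl; ring. Qed.

Lemma Cnorm2_RtoC r : Cnorm2 (RtoC r) = r * r.
Proof. unfold Cnorm2; simpl; ring. Qed.

Lemma Cnorm2_conj z : Cnorm2 (Cconj z) = Cnorm2 z.
Proof. unfold Cnorm2; simpl; ring. Qed.

Lemma Cnorm2_expi t : Cnorm2 (Cexpi t) = 1.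
Proof. unfold Cnorm2; simpl. pose proof (sin2_cos2 t); unfold Rsqr in *; lra. Qed.

Lemma Cmod_sqr z : Cmod z ^ 2 = Cnorm2 z.
Proof. unfold Cmod. rewrite pow2_sqrt; auto. apply Cnorm2_ge0. Qed.

Lemma Cnorm2_add_le z w : Cnorm2 (Cadd z w) <= 2 * Cnorm2 z + 2 * Cnorm2 w.
Proof.
  unfold Cnorm2; simpl.
  pose proof (pow2_ge_0 (cre z - cre w)); pose proof (pow2_ge_0 (cim z - cim w)); nra.
Qed.

(* Young's inequality [2ab <= t a^2 + b^2 / t], coordinatewise. *)
Lemma Cnorm2_add_weighted_le z w t :
  0 < t -> Cnorm2 (Cadd z w) <= (1 + t) * Cnorm2 z + (1 + / t) * Cnorm2 w.
Proof.
  intro Ht.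
  assert (Young : forall a b, (a + b) * (a + b) <= (1 + t) * (a * a) + (1 + / t) * (b * b)).
  { intros a b.
    assert (H : 0 <= (t * a - b) * (t * a - b) * / t)
      by (apply Rmult_le_pos; [apply Rle_0_sqr | left; apply Rinv_0_lt_compat; auto]).
    replace ((t * a - b) * (t * a - b) * / t) with (t * a * a - 2 * a * b + / t * b * b) in H
      by (field; lra).
    replace ((1 + / t) * (b * b)) with (b * b + / t * b * b) by ring. nra. }
  unfold Cnorm2; simpl.
  pose proof (Young (cre z) (cre w)); pose proof (Young (cim z) (cim w)); lra.
Qed.

Lemma Rabs_re_mul_conj_le z w : Rabs (cre (Cmul z (Cconj w))) <= (Cnorm2 z + Cnorm2 w) / 2.
Proof.
  unfold Cnorm2; simpl.
  pose proof (pow2_ge_0 (cre z - cre w)); pose proof (pow2_ge_0 (cim z - cim w));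
  pose proof (pow2_ge_0 (cre z + cre w)); pose proof (pow2_ge_0 (cim z + cim w)).
  apply Rabs_le; split; nra.
Qed.

Lemma Rabs_im_mul_conj_le z w : Rabs (cim (Cmul z (Cconj w))) <= (Cnorm2 z + Cnorm2 w) / 2.
Proof.
  unfold Cnorm2; simpl.
  pose proof (pow2_ge_0 (cim z - cre w)); pose proof (pow2_ge_0 (cre z + cim w));
  pose proof (pow2_ge_0 (cim z + cre w)); pose proof (pow2_ge_0 (cre z - cim w)).
  apply Rabs_le; split; nra.
Qed.

Lemma Un_cv_const (c : R) : Un_cv (fun _ => c) c.
Proof. intros eps He; exists O; intros; unfold Rdist; rewrite Rminus_diag, Rabs_R0; lra. Qed.

Lemma Un_cv_S (a : nat -> R) l : Un_cv a l -> Un_cv (fun N => a (S N)) l.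
Proof. intros H eps He. destruct (H eps He) as [K HK]. exists K; intros n Hn; apply HK; lia. Qed.

Lemma Un_cv_S_inv (a : nat -> R) l : Un_cv (fun N => a (S N)) l -> Un_cv a l.
Proof.
  intros H eps He. destruct (H eps He) as [K HK]. exists (S K); intros n Hn.
  destruct n; [lia | apply HK; lia].
Qed.

Lemma Un_cv_inv_succ : Un_cv (fun j => / (INR j + 1)) 0.
Proof.
  intros eps He. destruct (INR_archimed eps 1 He) as [N HN]. exists N. intros n Hn.
  unfold Rdist. rewrite Rminus_0_r. pose proof (pos_INR n).
  assert (INR N <= INR n) by (apply le_INR; lia).
  rewrite Rabs_right by (apply Rle_ge; left; apply Rinv_0_lt_compat; lra).
  apply (Rmult_lt_reg_r (INR n + 1)); [lra|]. rewrite Rinv_l by lra. nra.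
Qed.

Lemma inv_succ_pos (n : nat) : 0 < / (INR n + 1).
Proof. apply Rinv_0_lt_compat; pose proof (pos_INR n); lra. Qed.

Lemma inv_succ_le (n N : nat) : (N <= n)%nat -> / (INR n + 1) <= / (INR N + 1).
Proof.
  intro H. apply Rinv_le_contravar; [pose proof (pos_INR N); lra|]. apply le_INR in H; lra.
Qed.

Lemma inv_succ_lt_eventually eps c : 0 < eps -> exists N, forall n, (N <= n)%nat -> c * / (INR n + 1) <= eps.
Proof.
  intro He. destruct (INR_archimed eps (Rabs c) He) as [N HN]. exists N. intros n Hn.
  pose proof (inv_succ_le n N Hn). pose proof (inv_succ_pos n). pose proof (pos_INR N).
  pose proof (Rle_abs c). pose proof (Rabs_pos c).
  assert (Rabs c * / (INR N + 1) <= eps).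
  { apply (Rmult_le_reg_r (INR N + 1)); [lra|]. rewrite Rmult_assoc, Rinv_l by lra. nra. }
  nra.
Qed.

Lemma psumZ_ext (u v : Z -> R) N : (forall x, u x = v x) -> psumZ u N = psumZ v N.
Proof. intro H; induction N; simpl; rewrite ?IHN, ?H; auto. Qed.

Lemma psumZ_plus (u v : Z -> R) N : psumZ (fun x => u x + v x) N = psumZ u N + psumZ v N.
Proof. induction N; simpl; [ring | rewrite IHN; ring]. Qed.

Lemma psumZ_scal (u : Z -> R) c N : psumZ (fun x => c * u x) N = c * psumZ u N.
Proof. induction N; simpl; [ring | rewrite IHN; ring]. Qed.

Lemma psumZ_le (u v : Z -> R) N : (forall x, u x <= v x) -> psumZ u N <= psumZ v N.
Proof.
  intro H; induction N; cbn [psumZ]; [apply H|].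
  pose proof (H (Z.of_nat (S N))); pose proof (H (- Z.of_nat (S N))%Z); lra.
Qed.

Lemma psumZ_ge0 (u : Z -> R) N : (forall x, 0 <= u x) -> 0 <= psumZ u N.
Proof.
  intro H; induction N; cbn [psumZ]; [apply H|].
  pose proof (H (Z.of_nat (S N))); pose proof (H (- Z.of_nat (S N))%Z); lra.
Qed.

Lemma psumZ_growing (u : Z -> R) : (forall x, 0 <= u x) -> Un_growing (psumZ u).
Proof.
  intros H n; cbn [psumZ].
  pose proof (H (Z.of_nat (S n))); pose proof (H (- Z.of_nat (S n))%Z); lra.
Qed.

Lemma le_psumZ (u : Z -> R) x : (forall x, 0 <= u x) -> u x <= psumZ u (Z.abs_nat x).
Proof.
  intro H. destruct (Z.abs_nat x) as [|n] eqn:E.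
  - assert (x = 0%Z) by lia. subst; cbn [psumZ]; lra.
  - cbn [psumZ]. pose proof (psumZ_ge0 u n H).
    pose proof (H (Z.of_nat (S n))). pose proof (H (- Z.of_nat (S n))%Z).
    destruct (Z.le_ge_cases 0 x).
    + replace x with (Z.of_nat (S n)) by lia. lra.
    + replace x with (- Z.of_nat (S n))%Z by lia. lra.
Qed.

Lemma psumZ_shift (u : Z -> R) N :
  psumZ (fun x => u (x + 1)%Z) N + u (- Z.of_nat N)%Z = psumZ u N + u (Z.of_nat N + 1)%Z.
Proof.
  induction N; cbn [psumZ]; [simpl; ring|].
  rewrite Nat2Z.inj_succ. unfold Z.succ.
  replace (- (Z.of_nat N + 1) + 1)%Z with (- Z.of_nat N)%Z by lia. lra.
Qed.

Lemma psumZ_pointwise_cv (F : nat -> Z -> R) (G : Z -> R) :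
  (forall x, Un_cv (fun j => F j x) (G x)) -> forall N, Un_cv (fun j => psumZ (F j) N) (psumZ G N).
Proof. intros H N; induction N; cbn [psumZ]; auto. apply CV_plus; [apply CV_plus|]; auto. Qed.

Definition abs_summable (u : Z -> R) : Prop :=
  exists B, forall N, psumZ (fun x => Rabs (u x)) N <= B.

(* [zsum u] is [0] when the symmetric partial sums of [u] diverge. *)
Definition zsum (u : Z -> R) : R :=
  match excluded_middle_informative (exists l, Un_cv (psumZ u) l) with
  | left H => proj1_sig (constructive_indefinite_description _ H)
  | right _ => 0
  end.

Lemma zsum_eq (u : Z -> R) l : Un_cv (psumZ u) l -> zsum u = l.
Proof.
  intro H. unfold zsum. destruct excluded_middle_informative as [H'|H'].
  - destruct constructive_indefinite_description as [l' Hl']; simpl. eapply UL_sequence; eauto.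
  - exfalso; apply H'; eauto.
Qed.

Lemma psumZ_cv_of_nonneg (u : Z -> R) B :
  (forall x, 0 <= u x) -> (forall N, psumZ u N <= B) -> exists l, Un_cv (psumZ u) l.
Proof.
  intros H HB. destruct (growing_cv (psumZ u)) as [l Hl]; eauto using psumZ_growing.
  exists B; intros r [i ->]; apply HB.
Qed.

(* Split [u] into its positive and negative parts. *)
Lemma psumZ_cv_of_abs_summable (u : Z -> R) : abs_summable u -> exists l, Un_cv (psumZ u) l.
Proof.
  intros [B HB].
  set (P := fun x => (Rabs (u x) + u x) / 2). set (M := fun x => (Rabs (u x) - u x) / 2).
  assert (Hbounds : forall x, 0 <= P x /\ 0 <= M x /\ P x + M x = Rabs (u x) /\ P x - M x = u x).
  { intro x; unfold P, M. pose proof (Rle_abs (u x)); pose proof (Rle_abs (- u x)).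
    rewrite Rabs_Ropp in *. repeat split; lra. }
  destruct (psumZ_cv_of_nonneg P B) as [lP HlP]; [apply Hbounds|..].
  { intro N. eapply Rle_trans; [|apply (HB N)]. apply psumZ_le. intro x; pose proof (Hbounds x); lra. }
  destruct (psumZ_cv_of_nonneg M B) as [lM HlM]; [apply Hbounds|..].
  { intro N. eapply Rle_trans; [|apply (HB N)]. apply psumZ_le. intro x; pose proof (Hbounds x); lra. }
  exists (lP - lM). intros eps Heps. destruct (CV_minus _ _ _ _ HlP HlM eps Heps) as [K HK].
  exists K; intros n Hn.
  rewrite (psumZ_ext u (fun x => P x + (-1) * M x)) by (intro x; pose proof (Hbounds x); lra).
  rewrite psumZ_plus, psumZ_scal. replace (psumZ P n + -1 * psumZ M n) with (psumZ P n - psumZ M n)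
    by ring. auto.
Qed.

Lemma zsum_spec (u : Z -> R) : abs_summable u -> Un_cv (psumZ u) (zsum u).
Proof. intro H; destruct (psumZ_cv_of_abs_summable u H) as [l Hl]; rewrite (zsum_eq u l Hl); auto. Qed.

Lemma abs_summable_ext (u v : Z -> R) : (forall x, u x = v x) -> abs_summable u -> abs_summable v.
Proof. intro H; replace v with u; auto; apply functional_extensionality; auto. Qed.

Lemma abs_summable_le (u v : Z -> R) : (forall x, Rabs (u x) <= v x) -> abs_summable v -> abs_summable u.
Proof.
  intros H [B HB]; exists B; intro N. eapply Rle_trans; [|apply (HB N)]. apply psumZ_le.
  intro x. eapply Rle_trans; [apply H | apply Rle_abs].
Qed.

Lemma abs_summable_dominated (u v : Z -> R) :
  (forall x, 0 <= u x <= v x) -> abs_summable v -> abs_summable u.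
Proof. intros H. apply abs_summable_le. intro x; destruct (H x); rewrite Rabs_right; lra. Qed.

Lemma abs_summable_of_nonneg (u : Z -> R) B :
  (forall x, 0 <= u x) -> (forall N, psumZ u N <= B) -> abs_summable u.
Proof.
  intros H HB; exists B; intro N. rewrite (psumZ_ext _ u); auto.
  intro x; apply Rabs_right, Rle_ge, H.
Qed.

Lemma abs_summable_plus (u v : Z -> R) :
  abs_summable u -> abs_summable v -> abs_summable (fun x => u x + v x).
Proof.
  intros [A HA] [B HB]; exists (A + B); intro N.
  apply Rle_trans with (psumZ (fun x => Rabs (u x) + Rabs (v x)) N).
  - apply psumZ_le; intro; apply Rabs_triang.
  - rewrite psumZ_plus. specialize (HA N); specialize (HB N); lra.
Qed.

Lemma abs_summable_scal (u : Z -> R) c : abs_summable u -> abs_summable (fun x => c * u x).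
Proof.
  intros [A HA]; exists (Rabs c * A); intro N.
  rewrite (psumZ_ext _ (fun x => Rabs c * Rabs (u x))) by (intro; apply Rabs_mult).
  rewrite psumZ_scal. apply Rmult_le_compat_l; [apply Rabs_pos | auto].
Qed.

Lemma abs_summable_zero : abs_summable (fun _ => 0).
Proof.
  apply (abs_summable_of_nonneg _ 0); [intro; lra|]. intro N.
  rewrite (psumZ_ext _ (fun x => 0 * 0)) by (intro; ring). rewrite psumZ_scal; lra.
Qed.

Lemma zsum_ext (u v : Z -> R) : (forall x, u x = v x) -> zsum u = zsum v.
Proof. intro H; f_equal; apply functional_extensionality; auto. Qed.

Lemma zsum_plus (u v : Z -> R) :
  abs_summable u -> abs_summable v -> zsum (fun x => u x + v x) = zsum u + zsum v.
Proof.
  intros Hu Hv. apply zsum_eq. intros eps Heps.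
  destruct (CV_plus _ _ _ _ (zsum_spec u Hu) (zsum_spec v Hv) eps Heps) as [K HK].
  exists K; intros n Hn; rewrite psumZ_plus; auto.
Qed.

Lemma zsum_scal (u : Z -> R) c : abs_summable u -> zsum (fun x => c * u x) = c * zsum u.
Proof.
  intros Hu. apply zsum_eq. intros eps Heps.
  destruct (CV_mult (fun _ => c) _ c _ (Un_cv_const c) (zsum_spec u Hu) eps Heps) as [K HK].
  exists K; intros n Hn; rewrite psumZ_scal; auto.
Qed.

Lemma zsum_zero : zsum (fun _ => 0) = 0.
Proof.
  apply zsum_eq. intros eps Heps; exists O; intros n _.
  rewrite (psumZ_ext _ (fun x => 0 * 0)) by (intro; ring). rewrite psumZ_scal. unfold Rdist.
  rewrite Rmult_0_l, Rminus_0_r, Rabs_R0; lra.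
Qed.

Lemma zsum_le (u v : Z -> R) :
  abs_summable u -> abs_summable v -> (forall x, u x <= v x) -> zsum u <= zsum v.
Proof.
  intros Hu Hv H. apply (@Rle_cv_lim (psumZ u) (psumZ v) (zsum u) (zsum v)); auto using zsum_spec.
  intro; apply psumZ_le; auto.
Qed.

Lemma zsum_ge0 (u : Z -> R) : abs_summable u -> (forall x, 0 <= u x) -> 0 <= zsum u.
Proof. intros Hu H. rewrite <- zsum_zero. apply zsum_le; auto using abs_summable_zero. Qed.

Lemma psumZ_le_zsum (u : Z -> R) N : abs_summable u -> (forall x, 0 <= u x) -> psumZ u N <= zsum u.
Proof. intros Hu H. apply growing_ineq; auto using psumZ_growing, zsum_spec. Qed.

Lemma le_zsum (u : Z -> R) x : abs_summable u -> (forall x, 0 <= u x) -> u x <= zsum u.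
Proof. intros S H. eapply Rle_trans; [apply (le_psumZ u x H) | apply psumZ_le_zsum; auto]. Qed.

Lemma zsum_le_of_psumZ_le (u : Z -> R) r : abs_summable u -> (forall N, psumZ u N <= r) -> zsum u <= r.
Proof.
  intros Hu H. apply (@Rle_cv_lim (psumZ u) (fun _ => r) (zsum u) r); auto using zsum_spec, Un_cv_const.
Qed.

Lemma zsum_eq0_pointwise (u : Z -> R) :
  abs_summable u -> (forall x, 0 <= u x) -> zsum u = 0 -> forall x, u x = 0.
Proof. intros Hu H H0 x. apply Rle_antisym; [rewrite <- H0; apply le_zsum | apply H]; auto. Qed.

Lemma abs_summable_shift1 (u : Z -> R) : abs_summable u -> abs_summable (fun x => u (x + 1)%Z).
Proof.
  intros [B HB]; exists B; intro N. eapply Rle_trans; [|apply (HB (S N))].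
  pose proof (psumZ_shift (fun x => Rabs (u x)) N). cbn [psumZ].
  pose proof (Rabs_pos (u (- Z.of_nat N)%Z)). pose proof (Rabs_pos (u (- Z.of_nat (S N))%Z)).
  rewrite Nat2Z.inj_succ in *. unfold Z.succ in *. lra.
Qed.

Lemma abs_summable_shiftm1 (u : Z -> R) : abs_summable u -> abs_summable (fun x => u (x - 1)%Z).
Proof.
  intros [B HB]; exists B; intro N. eapply Rle_trans; [|apply (HB (S N))].
  pose proof (psumZ_shift (fun x => Rabs (u (x - 1)%Z)) N) as E. cbn [psumZ].
  rewrite (psumZ_ext (fun x => Rabs (u (x + 1 - 1)%Z)) (fun x => Rabs (u x))) in E
    by (intro; rewrite Z.add_simpl_r; auto).
  replace (- Z.of_nat N - 1)%Z with (- Z.of_nat (S N))%Z in E by lia.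
  pose proof (Rabs_pos (u (Z.of_nat N + 1 - 1)%Z)). pose proof (Rabs_pos (u (Z.of_nat (S N)))).
  lra.
Qed.

Lemma abs_summable_tails_cv0 (u : Z -> R) : abs_summable u ->
  Un_cv (fun N => u (Z.of_nat (S N))) 0 /\ Un_cv (fun N => u (- Z.of_nat (S N))%Z) 0.
Proof.
  intros [B HB].
  destruct (psumZ_cv_of_nonneg (fun x => Rabs (u x)) B) as [l Hl]; auto using Rabs_pos.
  assert (D : Un_cv (fun N => psumZ (fun x => Rabs (u x)) (S N) - psumZ (fun x => Rabs (u x)) N) 0).
  { intros eps Heps. destruct (CV_minus _ _ _ _ (Un_cv_S _ _ Hl) Hl eps Heps) as [K HK].
    exists K; intros n Hn; specialize (HK n Hn). replace 0 with (l - l) by ring. auto. }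
  split; intros eps Heps; destruct (D eps Heps) as [K HK]; exists K; intros n Hn; specialize (HK n Hn);
    unfold Rdist in *; simpl in *; rewrite Rminus_0_r in *;
    pose proof (Rabs_pos (u (Z.of_nat (S n)))); pose proof (Rabs_pos (u (- Z.of_nat (S n))%Z));
    simpl in *; rewrite Rabs_right in HK by lra; lra.
Qed.

Lemma zsum_shift1 (u : Z -> R) : abs_summable u -> zsum (fun x => u (x + 1)%Z) = zsum u.
Proof.
  intro Hu. apply zsum_eq, Un_cv_S_inv.
  destruct (abs_summable_tails_cv0 u Hu) as [T1 T2].
  assert (E : forall N, psumZ (fun x => u (x + 1)%Z) (S N) =
     psumZ u (S N) + u (Z.of_nat (S (S N))) - u (- Z.of_nat (S N))%Z).
  { intro N. pose proof (psumZ_shift u (S N)).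
    replace (Z.of_nat (S (S N))) with (Z.of_nat (S N) + 1)%Z by lia. lra. }
  intros eps Heps.
  destruct (CV_minus _ _ _ _ (CV_plus _ _ _ _ (Un_cv_S _ _ (zsum_spec u Hu)) (Un_cv_S _ _ T1)) T2
              eps Heps) as [K HK].
  exists K; intros n Hn; specialize (HK n Hn). rewrite E.
  replace (zsum u) with (zsum u + 0 - 0) by ring. auto.
Qed.

Definition csummable (u : Z -> Cx) : Prop :=
  abs_summable (fun x => cre (u x)) /\ abs_summable (fun x => cim (u x)).
Definition czsum (u : Z -> Cx) : Cx := mkCx (zsum (fun x => cre (u x))) (zsum (fun x => cim (u x))).

Lemma czsum_ext u v : (forall x, u x = v x) -> czsum u = czsum v.
Proof. intro H; f_equal; apply functional_extensionality; auto. Qed.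

Lemma csummable_plus u v : csummable u -> csummable v -> csummable (fun x => Cadd (u x) (v x)).
Proof. intros [A B] [C D]; split; simpl; apply abs_summable_plus; auto. Qed.

Lemma czsum_plus u v :
  csummable u -> csummable v -> czsum (fun x => Cadd (u x) (v x)) = Cadd (czsum u) (czsum v).
Proof.
  intros [A B] [C D]; apply Cx_ext; simpl.
  - apply (zsum_plus (fun x => cre (u x)) (fun x => cre (v x))); auto.
  - apply (zsum_plus (fun x => cim (u x)) (fun x => cim (v x))); auto.
Qed.

Lemma csummable_scal c u : csummable u -> csummable (fun x => Cmul c (u x)).
Proof.
  intros [A B]; split; simpl.
  - apply (abs_summable_ext (fun x => cre c * cre (u x) + (- cim c) * cim (u x))); [intro; ring|].
    apply abs_summable_plus; apply abs_summable_scal; auto.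
  - apply (abs_summable_plus (fun x => cre c * cim (u x)) (fun x => cim c * cre (u x)));
      apply abs_summable_scal; auto.
Qed.

Lemma czsum_scal c u : csummable u -> czsum (fun x => Cmul c (u x)) = Cmul c (czsum u).
Proof.
  intros [A B]; apply Cx_ext; simpl.
  - rewrite (zsum_ext _ (fun x => cre c * cre (u x) + (- cim c) * cim (u x))) by (intro; ring).
    rewrite zsum_plus, !zsum_scal; try apply abs_summable_scal; auto. ring.
  - rewrite zsum_plus, !zsum_scal; try apply abs_summable_scal; auto.
Qed.

Lemma czsum_conj u : csummable u -> czsum (fun x => Cconj (u x)) = Cconj (czsum u).
Proof.
  intros [A B]; apply Cx_ext; simpl; auto.
  rewrite (zsum_ext _ (fun x => (-1) * cim (u x))) by (intro; ring). rewrite zsum_scal; auto; ring.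
Qed.

Lemma czsum_zero : czsum (fun _ => C0) = C0.
Proof. apply Cx_ext; simpl; apply zsum_zero. Qed.

Lemma csummable_shift1 u : csummable u -> csummable (fun x => u (x + 1)%Z).
Proof.
  intros [A B]; split.
  - apply (abs_summable_shift1 (fun x => cre (u x))); auto.
  - apply (abs_summable_shift1 (fun x => cim (u x))); auto.
Qed.

Lemma czsum_shift1 u : csummable u -> czsum (fun x => u (x + 1)%Z) = czsum u.
Proof.
  intros [A B]; apply Cx_ext; simpl.
  - apply (zsum_shift1 (fun x => cre (u x))); auto.
  - apply (zsum_shift1 (fun x => cim (u x))); auto.
Qed.

Lemma psumZC_re u N : cre (psumZC u N) = psumZ (fun x => cre (u x)) N.
Proof. induction N; simpl; auto. rewrite IHN; auto. Qed.
Lemma psumZC_im u N : cim (psumZC u N) = psumZ (fun x => cim (u x)) N.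
Proof. induction N; simpl; auto. rewrite IHN; auto. Qed.

Definition abs2 (f : Seq) : Z -> R := fun x => Cnorm2 (f x).
Definition dotp (f g : Seq) : Z -> Cx := fun x => Cmul (f x) (Cconj (g x)).
Definition dotp2 (f g : Sp2) : Z -> Cx :=
  fun x => Cadd (dotp (fst f) (fst g) x) (dotp (snd f) (snd g) x).

Lemma abs2_ge0 (f : Seq) x : 0 <= abs2 f x.
Proof. apply Cnorm2_ge0. Qed.

Lemma abs2_szero : abs_summable (abs2 szero) /\ zsum (abs2 szero) = 0.
Proof.
  assert (E : forall x, 0 = abs2 szero x) by (intro; unfold abs2, szero, C0, Cnorm2; simpl; ring).
  split; [apply (abs_summable_ext _ _ E), abs_summable_zero|].
  rewrite <- (zsum_ext _ _ E). apply zsum_zero.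
Qed.

Lemma abs_summable_abs2_comb (c : Cx) (f g : Seq) :
  abs_summable (abs2 f) -> abs_summable (abs2 g) -> abs_summable (abs2 (sadd (ssc c f) g)).
Proof.
  intros Sf Sg. apply (abs_summable_dominated _ (fun x => 2 * Cnorm2 c * abs2 f x + 2 * abs2 g x)).
  - intro x; split; [apply abs2_ge0|]. unfold abs2, sadd, ssc.
    pose proof (Cnorm2_add_le (Cmul c (f x)) (g x)). rewrite Cnorm2_mul in H. lra.
  - apply abs_summable_plus; apply abs_summable_scal; auto.
Qed.

Lemma abs_summable_abs2_sub (f g : Seq) :
  abs_summable (abs2 f) -> abs_summable (abs2 g) -> abs_summable (abs2 (ssub f g)).
Proof.
  intros Sf Sg. apply (abs_summable_dominated _ (fun x => 2 * abs2 f x + 2 * abs2 g x)).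
  - intro x; split; [apply abs2_ge0|]. unfold abs2, ssub, sadd, ssc.
    pose proof (Cnorm2_add_le (f x) (Cmul (RtoC (-1)) (g x))).
    rewrite Cnorm2_mul, Cnorm2_RtoC in H. lra.
  - apply abs_summable_plus; apply abs_summable_scal; auto.
Qed.

Lemma csummable_dotp f g : abs_summable (abs2 f) -> abs_summable (abs2 g) -> csummable (dotp f g).
Proof.
  intros Sf Sg.
  assert (S : abs_summable (fun x => (abs2 f x + abs2 g x) / 2)).
  { apply (abs_summable_ext (fun x => /2 * (abs2 f x + abs2 g x))); [intro; field|].
    apply abs_summable_scal, abs_summable_plus; auto. }
  split; eapply abs_summable_le; try exact S; intro x; unfold dotp, abs2.
  - apply Rabs_re_mul_conj_le.
  - apply Rabs_im_mul_conj_le.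
Qed.

Lemma czsum_dotp_comb c (u v w : Seq) :
  abs_summable (abs2 u) -> abs_summable (abs2 v) -> abs_summable (abs2 w) ->
  czsum (dotp (sadd (ssc c u) v) w) = Cadd (Cmul c (czsum (dotp u w))) (czsum (dotp v w)).
Proof.
  intros Su Sv Sw.
  rewrite (czsum_ext _ (fun x => Cadd (Cmul c (dotp u w x)) (dotp v w x)))
    by (intro; unfold dotp, sadd, ssc; apply Cx_ext; simpl; ring).
  rewrite czsum_plus, czsum_scal; auto using csummable_dotp, csummable_scal.
Qed.

Lemma czsum_dotp_sub (u v w : Seq) :
  abs_summable (abs2 u) -> abs_summable (abs2 v) -> abs_summable (abs2 w) ->
  czsum (dotp (ssub u v) w) = Cadd (czsum (dotp u w)) (Cmul (RtoC (-1)) (czsum (dotp v w))).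
Proof.
  intros Su Sv Sw.
  rewrite (czsum_ext _ (fun x => Cadd (dotp u w x) (Cmul (RtoC (-1)) (dotp v w x))))
    by (intro; unfold dotp, ssub, sadd, ssc; apply Cx_ext; simpl; ring).
  rewrite czsum_plus, czsum_scal; auto using csummable_dotp, csummable_scal.
Qed.

Lemma czsum_dotp_szero f : czsum (dotp szero f) = C0.
Proof.
  rewrite <- czsum_zero. apply czsum_ext; intro; unfold dotp, szero, C0; apply Cx_ext; simpl; ring.
Qed.

Lemma czsum_dotp_conj (f g : Seq) : abs_summable (abs2 f) -> abs_summable (abs2 g) ->
  czsum (dotp g f) = Cconj (czsum (dotp f g)).
Proof.
  intros Sf Sg. rewrite <- czsum_conj by (apply csummable_dotp; auto).
  apply czsum_ext; intro; unfold dotp; apply Cx_ext; simpl; ring.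
Qed.

Lemma czsum_dotp_self_eq0 (f : Seq) : abs_summable (abs2 f) -> czsum (dotp f f) = C0 -> f = szero.
Proof.
  intros S H.
  assert (H0 : zsum (abs2 f) = 0).
  { transitivity (cre (czsum (dotp f f))); [|rewrite H; reflexivity].
    simpl. apply zsum_ext; intro; unfold abs2, dotp, Cnorm2; simpl; ring. }
  apply Seq_ext; intro x. apply Cnorm2_eq0, (zsum_eq0_pointwise (abs2 f) S (abs2_ge0 f) H0 x).
Qed.

Lemma sumsq_le_Sp1_iff (f : Sp1) r : sumsq_le f r <-> abs_summable (abs2 f) /\ zsum (abs2 f) <= r.
Proof.
  unfold sumsq_le; simpl; unfold pn1. split.
  - intro H.
    assert (S : abs_summable (abs2 f)) by (apply (abs_summable_of_nonneg _ r); [apply abs2_ge0 | exact H]).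
    split; [exact S | apply zsum_le_of_psumZ_le; [exact S | exact H]].
  - intros [S H] N. eapply Rle_trans; [|exact H]. apply (psumZ_le_zsum (abs2 f) N S (abs2_ge0 f)).
Qed.

Lemma l2_Sp1_iff (f : Sp1) : l2 f <-> abs_summable (abs2 f).
Proof.
  split.
  - intros [r Hr]. apply sumsq_le_Sp1_iff in Hr; tauto.
  - intro S. exists (zsum (abs2 f)). apply sumsq_le_Sp1_iff; split; auto; lra.
Qed.

Lemma sumsq_le_Sp2_iff (f : Sp2) r : sumsq_le f r <->
  abs_summable (abs2 (fst f)) /\ abs_summable (abs2 (snd f)) /\
  zsum (abs2 (fst f)) + zsum (abs2 (snd f)) <= r.
Proof.
  unfold sumsq_le; simpl; unfold pn1. split.
  - intro H.
    pose proof (fun N => psumZ_ge0 (abs2 (fst f)) N (abs2_ge0 _)).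
    pose proof (fun N => psumZ_ge0 (abs2 (snd f)) N (abs2_ge0 _)).
    assert (S1 : abs_summable (abs2 (fst f))).
    { apply (abs_summable_of_nonneg _ r); [apply abs2_ge0|]. intro N.
      specialize (H N). specialize (H1 N). unfold abs2 in *; lra. }
    assert (S2 : abs_summable (abs2 (snd f))).
    { apply (abs_summable_of_nonneg _ r); [apply abs2_ge0|]. intro N.
      specialize (H N). specialize (H0 N). unfold abs2 in *; lra. }
    repeat split; auto. rewrite <- zsum_plus; auto.
    apply zsum_le_of_psumZ_le; [apply abs_summable_plus; auto|].
    intro N; rewrite psumZ_plus; apply H.
  - intros (S1 & S2 & H) N.
    pose proof (psumZ_le_zsum (abs2 (fst f)) N S1 (abs2_ge0 _)).
    pose proof (psumZ_le_zsum (abs2 (snd f)) N S2 (abs2_ge0 _)). unfold abs2 in *; lra.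
Qed.

Lemma l2_Sp2_iff (f : Sp2) : l2 f <-> abs_summable (abs2 (fst f)) /\ abs_summable (abs2 (snd f)).
Proof.
  split.
  - intros [r Hr]. apply sumsq_le_Sp2_iff in Hr; tauto.
  - intros [S1 S2]. exists (zsum (abs2 (fst f)) + zsum (abs2 (snd f))).
    apply sumsq_le_Sp2_iff; repeat split; auto; lra.
Qed.

Lemma csummable_dotp2 (f g : Sp2) : l2 f -> l2 g -> csummable (dotp2 f g).
Proof.
  intros Hf Hg. apply l2_Sp2_iff in Hf; apply l2_Sp2_iff in Hg.
  apply csummable_plus; apply csummable_dotp; tauto.
Qed.

Lemma inner_is_iff (f g : Sp2) z : l2 f -> l2 g -> (inner_is f g z <-> z = czsum (dotp2 f g)).
Proof.
  intros Hf Hg. destruct (csummable_dotp2 f g Hf Hg) as [A B]. unfold inner_is. split.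
  - intros [H1 H2]. apply Cx_ext; simpl; symmetry; apply zsum_eq.
    + intros e He; destruct (H1 e He) as [K HK]; exists K; intros n Hn.
      specialize (HK n Hn). rewrite psumZC_re in HK. exact HK.
    + intros e He; destruct (H2 e He) as [K HK]; exists K; intros n Hn.
      specialize (HK n Hn). rewrite psumZC_im in HK. exact HK.
  - intros ->. simpl. split.
    + intros e He; destruct (zsum_spec _ A e He) as [K HK]; exists K; intros n Hn.
      rewrite psumZC_re. apply HK; auto.
    + intros e He; destruct (zsum_spec _ B e He) as [K HK]; exists K; intros n Hn.
      rewrite psumZC_im. apply HK; auto.
Qed.

Record lin_pair {V W : NSpace} (f : V -> W) (g : W -> V) : Prop := {
  lin_add : forall x y, f (vadd x y) = vadd (f x) (f y);
  lin_sc : forall c x, f (vsc c x) = vsc c (f x);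
  lin_zero : f vzero = vzero;
  inv_add : forall x y, g (vadd x y) = vadd (g x) (g y);
  inv_sc : forall c x, g (vsc c x) = vsc c (g x);
  inv_zero : g vzero = vzero;
  inv_left : forall x, g (f x) = x
}.

Record l2_iso {V W : NSpace} (A : V -> Prop) (B : W -> Prop) (f : V -> W) (g : W -> V) : Prop := {
  iso_lin : lin_pair f g;
  iso_right : forall y, B y -> f (g y) = y;
  iso_maps : forall x, A x -> B (f x);
  iso_maps_inv : forall y, B y -> A (g y);
  iso_sumsq : forall x r, sumsq_le x r -> sumsq_le (f x) r;
  iso_sumsq_inv : forall y r, sumsq_le y r -> sumsq_le (g y) r
}.

Lemma lincomb_linear {V W : NSpace} (f : V -> W)
  (Hadd : forall x y, f (vadd x y) = vadd (f x) (f y)) (Hsc : forall c x, f (vsc c x) = vsc c (f x))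
  (H0 : f vzero = vzero) cs vs : f (lincomb cs vs) = lincomb cs (map f vs).
Proof.
  revert vs; induction cs as [|c cs IH]; intros [|v vs]; simpl; auto. rewrite Hadd, Hsc, IH; auto.
Qed.

Lemma lin_lincomb {V W : NSpace} (f : V -> W) g (L : lin_pair f g) cs vs :
  f (lincomb cs vs) = lincomb cs (map f vs).
Proof. apply lincomb_linear; apply L. Qed.

Lemma inv_lincomb {V W : NSpace} (f : V -> W) g (L : lin_pair f g) cs vs :
  g (lincomb cs vs) = lincomb cs (map g vs).
Proof. apply lincomb_linear; apply L. Qed.

Lemma inv_vsub {V W : NSpace} (f : V -> W) g (L : lin_pair f g) x y : g (vsub x y) = vsub (g x) (g y).
Proof. unfold vsub; rewrite (inv_add _ _ L), (inv_sc _ _ L); auto. Qed.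

Lemma lin_vsub {V W : NSpace} (f : V -> W) g (L : lin_pair f g) x y : f (vsub x y) = vsub (f x) (f y).
Proof. unfold vsub; rewrite (lin_add _ _ L), (lin_sc _ _ L); auto. Qed.

Lemma lin_inj {V W : NSpace} (f : V -> W) g (L : lin_pair f g) x y : f x = f y -> x = y.
Proof. intro E. rewrite <- (inv_left _ _ L x), E. apply L. Qed.

Lemma map_id_on {A : Type} (f : A -> A) (P : A -> Prop) l :
  (forall x, P x -> f x = x) -> Forall P l -> map f l = l.
Proof. intros H HF; induction HF; simpl; auto. rewrite H, IHHF; auto. Qed.

Lemma dim_is_ext {V : NSpace} (P Q : V -> Prop) n : (forall x, P x <-> Q x) -> dim_is P n -> dim_is Q n.
Proof.
  intros H (vs & Hl & HF & Hi & Hs). exists vs; repeat split; auto.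
  - eapply Forall_impl; [|exact HF]. intros; apply H; auto.
  - intros f Hf; apply Hs, H; auto.
Qed.

Lemma dim_is_transfer {V W : NSpace} (P : V -> Prop) (P' : W -> Prop) (f : V -> W) (g : W -> V)
  (L : lin_pair f g) (Hf : forall x, P x -> P' (f x)) (Hg : forall y, P' y -> P (g y) /\ f (g y) = y) n :
  dim_is P n <-> dim_is P' n.
Proof.
  split; intros (vs & Hl & HF & Hi & Hs).
  - exists (map f vs). rewrite length_map. repeat split; auto.
    + apply Forall_map. eapply Forall_impl; [|exact HF]. auto.
    + intros cs Hcs Hz. rewrite length_map in Hcs. apply Hi; auto.
      rewrite <- (lin_lincomb f g L) in Hz. rewrite <- (inv_left _ _ L (lincomb cs vs)), Hz. apply L.
    + intros y Hy. destruct (Hg y Hy) as [Hgy Efy]. destruct (Hs _ Hgy) as (cs & Hcs & E).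
      exists cs; split; auto. rewrite <- Efy, E. apply (lin_lincomb f g L).
  - exists (map g vs). rewrite length_map. repeat split; auto.
    + apply Forall_map. eapply Forall_impl; [|exact HF]. intros a Ha; apply Hg; auto.
    + intros cs Hcs Hz. rewrite length_map in Hcs. apply Hi; auto.
      apply (f_equal f) in Hz. rewrite (lin_lincomb f g L), map_map, (map_id_on _ P') in Hz;
        [| intros; apply Hg; auto | auto].
      rewrite Hz; apply L.
    + intros x Hx. destruct (Hs _ (Hf x Hx)) as (cs & Hcs & E).
      exists cs; split; auto. rewrite <- (inv_left _ _ L x), E. apply (inv_lincomb f g L).
Qed.

(* The kernel transfer only needs [g] to be injective, not onto its codomain. *)
Lemma kernel_dim_transfer {V' W' V W : NSpace} (dom' : V' -> Prop) (dom : V -> Prop)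
  (T' : V' -> W') (T : V -> W) f fi g gi (If : l2_iso dom' dom f fi) (Lg : lin_pair g gi)
  (HT : forall x, T (f x) = g (T' x)) n :
  dim_is (kernel dom' T') n <-> dim_is (kernel dom T) n.
Proof.
  apply (dim_is_transfer _ _ f fi (iso_lin _ _ _ _ If)).
  - intros x [Hx Ex]. split; [apply If; auto|]. rewrite HT, Ex. apply Lg.
  - intros y [Hy Ey]. pose proof (iso_right _ _ _ _ If y Hy) as Ey'.
    split; [split|]; auto; [apply If; auto|].
    apply (lin_inj g gi Lg). rewrite <- HT, Ey', Ey. symmetry; apply Lg.
Qed.

Section FredholmTransfer.
Context {V' W' V W : NSpace} (dom' : V' -> Prop) (cod' : W' -> Prop) (dom : V -> Prop) (cod : W -> Prop)
  (T' : V' -> W') (T : V -> W) (f : V' -> V) (fi : V -> V') (g : W' -> W) (gi : W -> W').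
Hypotheses (If : l2_iso dom' dom f fi) (Ig : l2_iso cod' cod g gi) (HT : forall x, T (f x) = g (T' x)).

Let Lg := iso_lin _ _ _ _ Ig.

Lemma T_conj y : dom y -> T y = g (T' (fi y)).
Proof. intro Hy. rewrite <- HT, (iso_right _ _ _ _ If y Hy). reflexivity. Qed.

Lemma range_transfer w : range dom' T' w <-> range dom T (g w).
Proof.
  split.
  - intros [x [Hx ->]]. exists (f x); split; [apply If; auto | auto].
  - intros [y [Hy E]]. exists (fi y); split; [apply If; auto|].
    apply (lin_inj g gi Lg). rewrite E, T_conj; auto.
Qed.

Lemma range_transfer_inv y : range dom T y -> range dom' T' (gi y) /\ g (gi y) = y.
Proof.
  intros [z [Hz ->]]. rewrite T_conj, (inv_left _ _ Lg); auto.
  split; auto. exists (fi z); split; auto. apply If; auto.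
Qed.

Lemma maps_transfer : (forall x, dom' x -> cod' (T' x)) <-> (forall y, dom y -> cod (T y)).
Proof.
  split.
  - intros H y Hy. rewrite T_conj; auto. apply Ig, H, If; auto.
  - intros H x Hx. rewrite <- (inv_left _ _ Lg (T' x)), <- HT. apply Ig, H, If; auto.
Qed.

Lemma bounded_transfer : bounded_on dom' T' <-> bounded_on dom T.
Proof.
  split; intros [M HM]; exists M.
  - intros y r Hy Hr. rewrite T_conj; auto. apply Ig, HM; apply If; auto.
  - intros x r Hx Hr. rewrite <- (inv_left _ _ Lg (T' x)), <- HT. apply Ig, HM; apply If; auto.
Qed.

Lemma codim_transfer c : codim_is (range dom' T') cod' c <-> codim_is (range dom T) cod c.
Proof.
  split; intros (vs & Hl & HF & Hi & Hs).
  - exists (map g vs). rewrite length_map. repeat split; auto.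
    + apply Forall_map. eapply Forall_impl; [|exact HF]. apply Ig.
    + intros cs Hcs Hr. apply Hi, range_transfer; auto. rewrite (lin_lincomb g gi Lg); auto.
    + intros y Hy. destruct (Hs (gi y)) as (cs & r & Hcs & Hr & E); [apply Ig; auto|].
      exists cs, (g r). repeat split; auto; [apply range_transfer; auto|].
      rewrite <- (iso_right _ _ _ _ Ig y Hy), E, (lin_add _ _ Lg), (lin_lincomb g gi Lg); auto.
  - exists (map gi vs). rewrite length_map. repeat split; auto.
    + apply Forall_map. eapply Forall_impl; [|exact HF]. apply Ig.
    + intros cs Hcs Hr. apply Hi; auto. apply range_transfer in Hr.
      rewrite (lin_lincomb g gi Lg), map_map, (map_id_on _ cod) in Hr; auto. apply Ig.
    + intros w Hw. destruct (Hs (g w)) as (cs & r & Hcs & Hr & E); [apply Ig; auto|].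
      exists cs, (gi r). repeat split; auto; [apply range_transfer_inv; auto|].
      rewrite <- (inv_left _ _ Lg w), E, (inv_add _ _ Lg), (inv_lincomb g gi Lg); auto.
Qed.

Lemma l2_conv_transfer (hs : nat -> W') h : l2_conv hs h -> l2_conv (fun k => g (hs k)) (g h).
Proof.
  intros Hc eps He. destruct (Hc eps He) as [K HK]. exists K. intros k Hk.
  rewrite <- (lin_vsub g gi Lg). apply Ig; auto.
Qed.

Lemma l2_conv_transfer_inv (hs : nat -> W) h : l2_conv hs h -> l2_conv (fun k => gi (hs k)) (gi h).
Proof.
  intros Hc eps He. destruct (Hc eps He) as [K HK]. exists K. intros k Hk.
  rewrite <- (inv_vsub g gi Lg). apply Ig; auto.
Qed.

Lemma closed_range_transfer : Defs.closed_set cod -> (forall y, dom y -> cod (T y)) ->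
  Defs.closed_set (range dom' T') <-> Defs.closed_set (range dom T).
Proof.
  intros Hcl Hmaps. split; intros Hc hs h Hhs Hh Hconv.
  - assert (Hch : cod h).
    { apply (Hcl hs h); auto. intro k. destruct (Hhs k) as [z [Hz ->]]. auto. }
    rewrite <- (iso_right _ _ _ _ Ig h Hch). apply range_transfer.
    apply (Hc (fun k => gi (hs k))); auto using l2_conv_transfer_inv.
    + intro k. apply range_transfer_inv; auto.
    + destruct Hh as [r Hr]. exists r. apply Ig; auto.
  - apply range_transfer, (Hc (fun k => g (hs k))); auto using l2_conv_transfer.
    + intro k. apply range_transfer; auto.
    + destruct Hh as [r Hr]. exists r. apply Ig; auto.
Qed.

Lemma Fredholm_transfer : Defs.closed_set cod -> Fredholm dom' cod' T' <-> Fredholm dom cod T.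
Proof.
  intro Hcl. unfold Fredholm.
  rewrite maps_transfer, bounded_transfer.
  split; intros (Hm & Hb & [n Hn] & Hc & [c Hcd]); repeat split; auto.
  - exists n. apply (kernel_dim_transfer _ _ _ _ _ _ _ _ If Lg HT); auto.
  - apply closed_range_transfer; auto.
  - exists c. apply codim_transfer; auto.
  - exists n. apply (kernel_dim_transfer _ _ _ _ _ _ _ _ If Lg HT); auto.
  - apply (closed_range_transfer Hcl Hm); auto.
  - exists c. apply codim_transfer; auto.
Qed.

End FredholmTransfer.

(* [q = |q| e^{i th}] with [|q| = sqrt (1 + p) sqrt (1 - p)], i.e. [p^2 + |q|^2 = 1]. *)
Definition polar_params (p : R) (q : Cx) (th : R) : Prop :=
  sqrt (1 + p) * sqrt (1 + p) = 1 + p /\ sqrt (1 - p) * sqrt (1 - p) = 1 - p /\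
  Cmod q = sqrt (1 + p) * sqrt (1 - p) /\ cre q = Cmod q * cos th /\ cim q = Cmod q * sin th.

Lemma polar_params_of_Arg p q th :
  p ^ 2 + Cmod q ^ 2 = 1 -> Arg_is q th -> polar_params p q th.
Proof.
  intros Hpq [Hq _]. pose proof (sqrt_pos (Cnorm2 q)) as Q0; fold (Cmod q) in Q0.
  repeat split; try (apply sqrt_sqrt; nra).
  - rewrite <- sqrt_mult by nra. replace ((1 + p) * (1 - p)) with (Cmod q ^ 2) by lra.
    rewrite sqrt_pow2; auto.
  - pose proof (f_equal cre Hq) as E. simpl in E. rewrite E at 1. ring.
  - pose proof (f_equal cim Hq) as E. simpl in E. rewrite E at 1. ring.
Qed.

Definition epsinv (p th : R) (g : Sp2) : Sp2 :=
  let s := RtoC (/ sqrt 2) in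
  let cp := RtoC (sqrt (1 + p)) in
  let cm := RtoC (sqrt (1 - p)) in
  let e := Cexpi th in
  (ssc s (sadd (ssc cp (fst g)) (ssc (Cmul cm e) (Lsh (snd g)))),
   ssc s (sadd (ssc (RtoC (- sqrt (1 - p))) (fst g)) (ssc (Cmul cp e) (Lsh (snd g))))).

Definition grading (f : Sp2) : Sp2 := (fst f, ssc (RtoC (-1)) (snd f)).

(* Closes the pointwise identities on [epsop]: after eliminating [sqrt (1 - p)] and
   [sin th] through [r2^2 = 2 - r1^2] and [s^2 = 1 - c^2], they are polynomial. *)
Ltac polar_field p th H1 H2 :=
  simpl; rewrite ?cos_neg, ?sin_neg, ?Z.sub_add, ?Z.add_simpl_r;
  set (r1 := sqrt (1 + p)) in *; set (r2 := sqrt (1 - p)) in *;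
  set (c := cos th) in *; set (s := sin th) in *; set (iw := / sqrt 2) in *;
  assert (Hcs : c * c + s * s = 1)
    by (unfold c, s; pose proof (sin2_cos2 th) as E; unfold Rsqr in E; lra);
  assert (Hw : iw ^ 2 = / 2)
    by (unfold iw; rewrite pow_inv, pow2_sqrt by (try apply Rgt_not_eq, sqrt_lt_R0; lra); reflexivity);
  clearbody r1 r2 c s iw;
  assert (Hp : p = r1 * r1 - 1) by lra; rewrite ?Hp;
  assert (Hs : s ^ 2 = 1 - c ^ 2) by nra; assert (Hr : r2 ^ 2 = 2 - r1 ^ 2) by nra;
  clear H1 H2 Hcs Hp; field_simplify_eq; rewrite ?Hs, ?Hr, ?Hw; field.

Section Epsilon.
Variables (p th : R).
Hypotheses (G1 : sqrt (1 + p) * sqrt (1 + p) = 1 + p) (G2 : sqrt (1 - p) * sqrt (1 - p) = 1 - p).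

Lemma eps_epsinv f : epsop p th (epsinv p th f) = f.
Proof.
  destruct f as [f1 f2]. unfold epsinv, epsop, ssub, sadd, ssc, Lsh, Lsh_adj.
  apply Seq2_ext; intro x; apply Cx_ext; polar_field p th G1 G2.
Qed.

Lemma epsinv_eps f : epsinv p th (epsop p th f) = f.
Proof.
  destruct f as [f1 f2]. unfold epsinv, epsop, ssub, sadd, ssc, Lsh, Lsh_adj.
  apply Seq2_ext; intro x; apply Cx_ext; polar_field p th G1 G2.
Qed.

Lemma eps_lin_pair : lin_pair (epsop p th) (epsinv p th).
Proof.
  split; try (intros; apply Seq2_ext; intro; apply Cx_ext;
    unfold epsop, epsinv, ssub, sadd, ssc, Lsh, Lsh_adj, szero, C0; simpl; ring).
  exact epsinv_eps.
Qed.

(* [epsop] mixes [f1 x], [f2 x] into [(eps f)_1 x], [(eps f)_2 (x + 1)] by a unitary 2x2 matrix. *)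
Lemma eps_abs2_pointwise f x :
  abs2 (fst (epsop p th f)) x + abs2 (snd (epsop p th f)) (x + 1)%Z = abs2 (fst f) x + abs2 (snd f) x.
Proof.
  destruct f as [f1 f2]. unfold abs2, Cnorm2, epsop, ssub, sadd, ssc, Lsh_adj. polar_field p th G1 G2.
Qed.

Lemma epsinv_abs2_pointwise g x :
  abs2 (fst (epsinv p th g)) x + abs2 (snd (epsinv p th g)) x = abs2 (fst g) x + abs2 (snd g) (x + 1)%Z.
Proof.
  destruct g as [g1 g2]. unfold abs2, Cnorm2, epsinv, ssub, sadd, ssc, Lsh. polar_field p th G1 G2.
Qed.

Lemma eps_dotp_pointwise f g x :
  Cadd (dotp (fst (epsop p th f)) (fst (epsop p th g)) x)
       (dotp (snd (epsop p th f)) (snd (epsop p th g)) (x + 1)%Z) = dotp2 f g x.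
Proof.
  destruct f as [f1 f2], g as [g1 g2]. unfold dotp2, dotp, epsop, ssub, sadd, ssc, Lsh_adj.
  apply Cx_ext; polar_field p th G1 G2.
Qed.

Lemma zsum_shifted_identity (a b c d : Z -> R) :
  (forall x, 0 <= a x) -> (forall x, 0 <= b x) ->
  (forall x, a x + b (x + 1)%Z = c x + d x) -> abs_summable (fun x => c x + d x) ->
  abs_summable a /\ abs_summable b /\ zsum a + zsum b = zsum (fun x => c x + d x).
Proof.
  intros Ha Hb E S.
  assert (Hle : forall x, 0 <= a x <= c x + d x /\ 0 <= b (x + 1)%Z <= c x + d x).
  { intro x. pose proof (E x); pose proof (Ha x); pose proof (Hb (x + 1)%Z); lra. }
  assert (Sa : abs_summable a) by (apply (abs_summable_dominated _ _ (fun x => proj1 (Hle x)) S)).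
  assert (Sb1 : abs_summable (fun x => b (x + 1)%Z))
    by (apply (abs_summable_dominated _ _ (fun x => proj2 (Hle x)) S)).
  assert (Sb : abs_summable b).
  { apply (abs_summable_ext (fun x => b (x - 1 + 1)%Z)); [intro; rewrite Z.sub_add; auto|].
    apply (abs_summable_shiftm1 (fun x => b (x + 1)%Z)); auto. }
  repeat split; auto.
  rewrite <- (zsum_shift1 b), <- zsum_plus by auto. apply zsum_ext, E.
Qed.

Lemma eps_sumsq_le f r : sumsq_le f r -> sumsq_le (epsop p th f) r.
Proof.
  intro H. apply sumsq_le_Sp2_iff in H. destruct H as (S1 & S2 & H).
  destruct (zsum_shifted_identity _ _ _ _ (abs2_ge0 _) (abs2_ge0 _) (eps_abs2_pointwise f)
              (abs_summable_plus _ _ S1 S2)) as (T1 & T2 & E).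
  apply sumsq_le_Sp2_iff; repeat split; auto. rewrite E, zsum_plus; auto.
Qed.

Lemma epsinv_sumsq_le g r : sumsq_le g r -> sumsq_le (epsinv p th g) r.
Proof.
  intro H. apply sumsq_le_Sp2_iff in H. destruct H as (S1 & S2 & H).
  set (e := epsinv p th g).
  assert (S2s : abs_summable (fun x => abs2 (snd g) (x + 1)%Z))
    by (apply (abs_summable_shift1 (abs2 (snd g))); auto).
  assert (Hle : forall x, 0 <= abs2 (fst e) x <= abs2 (fst g) x + abs2 (snd g) (x + 1)%Z /\
                          0 <= abs2 (snd e) x <= abs2 (fst g) x + abs2 (snd g) (x + 1)%Z).
  { intro x. pose proof (epsinv_abs2_pointwise g x); pose proof (abs2_ge0 (fst e) x);
    pose proof (abs2_ge0 (snd e) x); unfold e in *; lra. }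
  assert (Se : abs_summable (fun x => abs2 (fst g) x + abs2 (snd g) (x + 1)%Z))
    by (apply abs_summable_plus; auto).
  assert (T1 : abs_summable (abs2 (fst e)))
    by (apply (abs_summable_dominated _ _ (fun x => proj1 (Hle x)) Se)).
  assert (T2 : abs_summable (abs2 (snd e)))
    by (apply (abs_summable_dominated _ _ (fun x => proj2 (Hle x)) Se)).
  apply sumsq_le_Sp2_iff; repeat split; auto.
  rewrite <- zsum_plus by auto. unfold e.
  rewrite (zsum_ext _ _ (epsinv_abs2_pointwise g)), zsum_plus, zsum_shift1; auto.
Qed.

Lemma eps_l2 f : l2 f -> l2 (epsop p th f).
Proof. intros [r Hr]; exists r; apply eps_sumsq_le; auto. Qed.

Lemma epsinv_l2 g : l2 g -> l2 (epsinv p th g).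
Proof. intros [r Hr]; exists r; apply epsinv_sumsq_le; auto. Qed.

Lemma eps_dotp2_czsum f g :
  l2 f -> l2 g -> czsum (dotp2 (epsop p th f) (epsop p th g)) = czsum (dotp2 f g).
Proof.
  intros Hf Hg.
  pose proof (eps_l2 f Hf) as Ef. pose proof (eps_l2 g Hg) as Eg.
  apply l2_Sp2_iff in Ef; apply l2_Sp2_iff in Eg.
  assert (B : csummable (dotp (snd (epsop p th f)) (snd (epsop p th g)))) by (apply csummable_dotp; tauto).
  unfold dotp2 at 1. rewrite czsum_plus by (auto; apply csummable_dotp; tauto).
  rewrite <- (czsum_shift1 _ B), <- czsum_plus by (auto using csummable_shift1; apply csummable_dotp; tauto).
  apply czsum_ext, eps_dotp_pointwise.
Qed.

Lemma eps_unitary : unitary (epsop p th).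
Proof.
  split; [|split; [|split]].
  - intros c f g. rewrite (lin_add _ _ eps_lin_pair), (lin_sc _ _ eps_lin_pair); auto.
  - apply eps_l2.
  - intros g Hg. exists (epsinv p th g). auto using epsinv_l2, eps_epsinv.
  - intros f g z Hf Hg Hz. apply inner_is_iff in Hz; auto.
    apply inner_is_iff; auto using eps_l2. rewrite eps_dotp2_czsum; auto.
Qed.

End Epsilon.

Lemma Gam_eps p q th (G : polar_params p q th) f :
  Gam p q (epsop p th f) = epsop p th (grading f).
Proof.
  destruct G as (H1 & H2 & H3 & Hq1 & Hq2). destruct f as [f1 f2].
  unfold grading, epsop, Gam, ssub, sadd, ssc, Lsh, Lsh_adj.
  apply Seq2_ext; intro x; apply Cx_ext; simpl; rewrite ?Hq1, ?Hq2, ?H3;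
    clear Hq1 Hq2 H3; polar_field p th H1 H2.
Qed.

Lemma Qop_eps p q th a1 a2 b (G : polar_params p q th) f :
  Qop p q a1 a2 b (epsop p th f) = epsop p th (Qblock p q th a1 a2 b f).
Proof.
  destruct G as (H1 & H2 & H3 & Hq1 & Hq2). destruct f as [f1 f2].
  unfold Qop, epsop, Qblock, Qeps_m, Qeps_p, Qeps, Gam, Coin, vsub, ssub, sadd, ssc, smul,
    Lsh, Lsh_adj, Cinv, Cnorm2.
  apply Seq2_ext; intro x; apply Cx_ext; simpl; rewrite ?Hq1, ?Hq2, ?H3;
    clear Hq1 Hq2 H3; polar_field p th H1 H2.
Qed.

Definition coin_bounded (a1 a2 : Z -> R) (b : Z -> Cx) : Prop :=
  forall x, -1 <= a1 x <= 1 /\ -1 <= a2 x <= 1 /\ Cnorm2 (b x) <= 1.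

Lemma coin_bounded_of_unit (a1 a2 : Z -> R) (b : Z -> Cx) :
  (forall x, a1 x ^ 2 + Cmod (b x) ^ 2 = 1) -> (forall x, a2 x ^ 2 + Cmod (b x) ^ 2 = 1) ->
  coin_bounded a1 a2 b.
Proof.
  intros Hab1 Hab2 x. specialize (Hab1 x); specialize (Hab2 x). rewrite Cmod_sqr in *.
  pose proof (Cnorm2_ge0 (b x)). repeat split; nra.
Qed.

Lemma Cnorm2_sub_add_le X Y W :
  Cnorm2 (Cadd (Cadd X (Cmul (RtoC (-1)) Y)) W) <= 4 * Cnorm2 X + 4 * Cnorm2 Y + 2 * Cnorm2 W.
Proof.
  pose proof (Cnorm2_add_le (Cadd X (Cmul (RtoC (-1)) Y)) W).
  pose proof (Cnorm2_add_le X (Cmul (RtoC (-1)) Y)). rewrite Cnorm2_mul, Cnorm2_RtoC in *. lra.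
Qed.

Lemma weighted_le a n F : 0 <= a <= 4 -> 0 <= n <= 1 -> 0 <= F -> a * (n * F) <= 4 * F.
Proof. intros Ha Hn HF. assert (n * F <= F) by nra. nra. Qed.

Section QepsBounds.
Variables (sg p : R) (q : Cx) (th : R) (a1 a2 : Z -> R) (b : Z -> Cx).
Hypotheses (Hsg : sg * sg = 1) (Hp : -1 <= p <= 1) (Hq : Cmod q <= 1) (Hc : coin_bounded a1 a2 b).

(* Each of the three terms of [-2i Qeps] has coefficient of modulus at most 2. *)
Lemma Qeps_abs2_le f x :
  abs2 (Qeps sg p q th a1 a2 b f) x <= 4 * (abs2 f (x + 1)%Z + abs2 f (x - 1)%Z + abs2 f x).
Proof.
  unfold abs2, Qeps, ssub, ssc, sadd, smul, Lsh, Lsh_adj.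
  set (X := Cmul (Cmul (RtoC (1 + sg * p)) (Cexpi th)) (Cmul (b (x + 1)%Z) (f (x + 1)%Z))).
  set (Y := Cmul (Cmul (RtoC (1 - sg * p)) (Cexpi (- th))) (Cmul (Cconj (b x)) (f (x - 1)%Z))).
  set (W := Cmul (RtoC (sg * Cmod q)) (Cmul (RtoC (a2 (x + 1)%Z - a1 x)) (f x))).
  pose proof (Cnorm2_sub_add_le X Y W) as Hsum.
  rewrite Cnorm2_mul.
  replace (Cnorm2 (Cinv (Cmul (RtoC (-2)) Ci))) with (/ 4)
    by (unfold Cinv, Cmul, RtoC, Ci; simpl; unfold Cnorm2; simpl; field).
  unfold X, Y, W in *. rewrite !Cnorm2_mul, !Cnorm2_RtoC, !Cnorm2_expi, !Cnorm2_conj in Hsum.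
  destruct (Hc x) as (A1 & _ & B0). destruct (Hc (x + 1)%Z) as (_ & A2 & B1).
  pose proof (Cnorm2_ge0 (f (x + 1)%Z)). pose proof (Cnorm2_ge0 (f (x - 1)%Z)).
  pose proof (Cnorm2_ge0 (f x)). pose proof (Cnorm2_ge0 (b x)). pose proof (Cnorm2_ge0 (b (x + 1)%Z)).
  assert (Hsp : -1 <= sg * p <= 1) by (split; nra).
  pose proof (sqrt_pos (Cnorm2 q)) as Q0; fold (Cmod q) in Q0.
  assert (E1 : (1 + sg * p) * (1 + sg * p) * 1 * (Cnorm2 (b (x + 1)%Z) * Cnorm2 (f (x + 1)%Z))
               <= 4 * Cnorm2 (f (x + 1)%Z)).
  { rewrite Rmult_1_r. apply weighted_le; nra. }
  assert (E2 : (1 - sg * p) * (1 - sg * p) * 1 * (Cnorm2 (b x) * Cnorm2 (f (x - 1)%Z))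
               <= 4 * Cnorm2 (f (x - 1)%Z)).
  { rewrite Rmult_1_r. apply weighted_le; nra. }
  assert (E3 : sg * Cmod q * (sg * Cmod q) * ((a2 (x + 1)%Z - a1 x) * (a2 (x + 1)%Z - a1 x) * Cnorm2 (f x))
               <= 4 * Cnorm2 (f x)).
  { replace (sg * Cmod q * (sg * Cmod q)) with (Cmod q * Cmod q)
      by (transitivity (sg * sg * (Cmod q * Cmod q)); [rewrite Hsg; ring | ring]).
    assert (Hm : 0 <= Cmod q * Cmod q <= 1) by nra.
    assert (Hd : -2 <= a2 (x + 1)%Z - a1 x <= 2) by lra.
    pose proof (Cnorm2_ge0 (f x)) as HF.
    clear - Hm Hd HF.
    set (d := a2 (x + 1)%Z - a1 x) in *. set (F := Cnorm2 (f x)) in *. set (m := Cmod q * Cmod q) in *.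
    assert (d * d <= 4) by nra. assert (0 <= d * d) by nra.
    assert (d * d * F <= 4 * F) by nra. assert (0 <= d * d * F) by nra. nra. }
  lra.
Qed.

Lemma Qeps_l2 f : abs_summable (abs2 f) -> abs_summable (abs2 (Qeps sg p q th a1 a2 b f)).
Proof.
  intro S. apply (abs_summable_dominated _ (fun x => 4 * (abs2 f (x + 1)%Z + abs2 f (x - 1)%Z + abs2 f x))).
  - intro x; split; [apply abs2_ge0 | apply Qeps_abs2_le].
  - apply abs_summable_scal, abs_summable_plus; [apply abs_summable_plus|]; auto.
    + apply (abs_summable_shift1 (abs2 f)); auto.
    + apply (abs_summable_shiftm1 (abs2 f)); auto.
Qed.

End QepsBounds.

Lemma Qeps_linear sg p q th a1 a2 b c (f g : Seq) :
  Qeps sg p q th a1 a2 b (sadd (ssc c f) g) =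
  sadd (ssc c (Qeps sg p q th a1 a2 b f)) (Qeps sg p q th a1 a2 b g).
Proof.
  apply Seq_ext; intro x. unfold Qeps, ssc, sadd, ssub, smul, Lsh, Lsh_adj. apply Cx_ext; simpl; ring.
Qed.

Lemma Qeps_szero sg p q th a1 a2 b : Qeps sg p q th a1 a2 b szero = szero.
Proof.
  apply Seq_ext; intro x. unfold Qeps, ssc, sadd, ssub, smul, Lsh, Lsh_adj, szero, C0.
  apply Cx_ext; simpl; ring.
Qed.

(* The three families into which both [dotp (Qeps_p g) h] and [dotp g (Qeps_m h)]
   decompose, up to a unit shift of the index. *)
Definition dotp_fwd (b : Z -> Cx) (g h : Seq) (y : Z) : Cx :=
  Cmul (Cmul (b y) (g y)) (Cconj (h (y - 1)%Z)).
Definition dotp_bwd (b : Z -> Cx) (g h : Seq) (y : Z) : Cx :=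
  Cmul (Cmul (Cconj (b y)) (g (y - 1)%Z)) (Cconj (h y)).
Definition dotp_diag (a1 a2 : Z -> R) (g h : Seq) (y : Z) : Cx :=
  Cmul (Cmul (RtoC (a2 (y + 1)%Z - a1 y)) (g y)) (Cconj (h y)).
Definition Qeps_coef : Cx := Cinv (Cmul (RtoC (-2)) Ci).

Lemma dotp_Qeps_p p q th a1 a2 b (g h : Seq) x :
  dotp (Qeps_p p q th a1 a2 b g) h x =
  Cadd (Cadd (Cmul (Cmul Qeps_coef (Cmul (RtoC (1 + p)) (Cexpi th))) (dotp_fwd b g h (x + 1)%Z))
             (Cmul (Cmul Qeps_coef (Cmul (RtoC (-1)) (Cmul (RtoC (1 - p)) (Cexpi (- th)))))
                   (dotp_bwd b g h x)))
       (Cmul (Cmul Qeps_coef (RtoC (Cmod q))) (dotp_diag a1 a2 g h x)).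
Proof.
  unfold dotp, Qeps_p, Qeps, dotp_fwd, dotp_bwd, dotp_diag, Qeps_coef, ssc, sadd, ssub, smul, Lsh, Lsh_adj.
  rewrite Z.add_simpl_r. apply Cx_ext; simpl; ring.
Qed.

Lemma dotp_Qeps_m p q th a1 a2 b (g h : Seq) x :
  dotp g (Qeps_m p q th a1 a2 b h) x =
  Cadd (Cadd (Cmul (Cmul Qeps_coef (Cmul (RtoC (1 + p)) (Cexpi th))) (dotp_fwd b g h x))
             (Cmul (Cmul Qeps_coef (Cmul (RtoC (-1)) (Cmul (RtoC (1 - p)) (Cexpi (- th)))))
                   (dotp_bwd b g h (x + 1)%Z)))
       (Cmul (Cmul Qeps_coef (RtoC (Cmod q))) (dotp_diag a1 a2 g h x)).
Proof.
  unfold dotp, Qeps_m, Qeps, dotp_fwd, dotp_bwd, dotp_diag, Qeps_coef, ssc, sadd, ssub, smul, Lsh, Lsh_adj.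
  rewrite Z.add_simpl_r.
  apply Cx_ext; simpl; rewrite ?cos_neg, ?sin_neg;
    replace (Cnorm2 (Cmul (RtoC (-2)) Ci)) with 4 by (unfold Cnorm2; simpl; ring); field.
Qed.

Lemma csummable_weighted_dotp (w g h : Z -> Cx) M : (forall y, Cnorm2 (w y) <= M) ->
  abs_summable (fun y => Cnorm2 (g y)) -> abs_summable (fun y => Cnorm2 (h y)) ->
  csummable (fun y => Cmul (Cmul (w y) (g y)) (Cconj (h y))).
Proof.
  intros HM Sg Sh.
  assert (S : abs_summable (fun y => (Rabs M * Cnorm2 (g y) + Cnorm2 (h y)) / 2)).
  { apply (abs_summable_ext (fun y => /2 * (Rabs M * Cnorm2 (g y) + Cnorm2 (h y)))); [intro; field|].
    apply abs_summable_scal, abs_summable_plus; [apply abs_summable_scal|]; auto. }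
  assert (B : forall y, (Cnorm2 (Cmul (w y) (g y)) + Cnorm2 (h y)) / 2
                        <= (Rabs M * Cnorm2 (g y) + Cnorm2 (h y)) / 2).
  { intro y. rewrite Cnorm2_mul. pose proof (HM y). pose proof (Cnorm2_ge0 (g y)).
    pose proof (Rle_abs M). assert (Cnorm2 (w y) * Cnorm2 (g y) <= Rabs M * Cnorm2 (g y)) by nra. lra. }
  split; eapply abs_summable_le; try exact S; intro y.
  - eapply Rle_trans; [apply Rabs_re_mul_conj_le | apply B].
  - eapply Rle_trans; [apply Rabs_im_mul_conj_le | apply B].
Qed.

Lemma Qeps_adjoint p q th a1 a2 b (Hc : coin_bounded a1 a2 b) (g h : Seq) :
  abs_summable (abs2 g) -> abs_summable (abs2 h) ->
  czsum (dotp (Qeps_p p q th a1 a2 b g) h) = czsum (dotp g (Qeps_m p q th a1 a2 b h)).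
Proof.
  intros Sg Sh.
  assert (C1 : csummable (dotp_fwd b g h)).
  { apply (csummable_weighted_dotp b g (fun y => h (y - 1)%Z) 1); auto.
    - intro y; apply (Hc y).
    - apply (abs_summable_shiftm1 (abs2 h)); auto. }
  assert (C2 : csummable (dotp_bwd b g h)).
  { apply (csummable_weighted_dotp (fun y => Cconj (b y)) (fun y => g (y - 1)%Z) h 1); auto.
    - intro y; rewrite Cnorm2_conj; apply (Hc y).
    - apply (abs_summable_shiftm1 (abs2 g)); auto. }
  assert (C3 : csummable (dotp_diag a1 a2 g h)).
  { apply (csummable_weighted_dotp (fun y => RtoC (a2 (y + 1)%Z - a1 y)) g h 4); auto.
    intro y; rewrite Cnorm2_RtoC.
    destruct (Hc y) as (A & _ & _). destruct (Hc (y + 1)%Z) as (_ & A' & _). nra. }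
  rewrite (czsum_ext _ _ (dotp_Qeps_p p q th a1 a2 b g h)), (czsum_ext _ _ (dotp_Qeps_m p q th a1 a2 b g h)).
  pose proof (csummable_shift1 _ C1). pose proof (csummable_shift1 _ C2).
  rewrite !czsum_plus; try apply csummable_plus; try apply csummable_scal; auto.
  rewrite !czsum_scal, !czsum_shift1; auto.
Qed.

Record l2_operator (T : Seq -> Seq) : Prop := {
  op_l2 : forall f, abs_summable (abs2 f) -> abs_summable (abs2 (T f));
  op_linear : forall c f g, T (sadd (ssc c f) g) = sadd (ssc c (T f)) (T g);
  op_szero : T szero = szero }.

Definition in_range (T : Seq -> Seq) (m : Seq) : Prop := exists f, abs_summable (abs2 f) /\ m = T f.

Lemma in_range_iff T m : in_range T m <-> @range Sp1 Sp1 (@l2 Sp1) T m.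
Proof. split; intros [f [Hf E]]; exists f; split; auto; apply l2_Sp1_iff; auto. Qed.

Lemma sadd_szero (f : Seq) : sadd f szero = f.
Proof. apply Seq_ext; intro; unfold sadd, szero, C0; apply Cx_ext; simpl; ring. Qed.

Lemma ssc_one (f : Seq) : ssc (RtoC 1) f = f.
Proof. apply Seq_ext; intro; unfold ssc; apply Cx_ext; simpl; ring. Qed.

Section Range.
Variables (T : Seq -> Seq) (O : l2_operator T).

Lemma in_range_comb c u v : in_range T u -> in_range T v -> in_range T (sadd (ssc c u) v).
Proof.
  intros [f [Sf ->]] [g [Sg ->]]. exists (sadd (ssc c f) g).
  split; [apply abs_summable_abs2_comb; auto | symmetry; apply O].
Qed.

Lemma in_range_szero : in_range T szero.
Proof. exists szero; split; [apply abs2_szero | symmetry; apply O]. Qed.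

Lemma in_range_l2 m : in_range T m -> abs_summable (abs2 m).
Proof. intros [f [Sf ->]]; apply O; auto. Qed.

Lemma in_range_scal c u : in_range T u -> in_range T (ssc c u).
Proof. intro H. rewrite <- sadd_szero. apply in_range_comb; auto using in_range_szero. Qed.

Lemma in_range_add u v : in_range T u -> in_range T v -> in_range T (sadd u v).
Proof. intros. rewrite <- (ssc_one u). apply in_range_comb; auto. Qed.

Lemma in_range_lincomb (cs : list Cx) (us : list Seq) :
  Forall (in_range T) us -> in_range T (@lincomb Sp1 cs us).
Proof.
  revert us; induction cs as [|c cs IH]; intros [|u us] HF; simpl; try apply in_range_szero.
  inversion HF; subst. apply in_range_comb; auto.
Qed.

End Range.

Lemma Rle_of_le_mul_all a b : 0 <= b -> (forall t, 0 < t -> a <= (1 + t) * b) -> a <= b.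
Proof.
  intros Hb H. apply Rnot_lt_le; intro Hlt.
  set (t := (a - b) / (2 * (b + 1))). assert (Ht : 0 < t) by (unfold t; apply Rdiv_lt_0_compat; lra).
  specialize (H t Ht). assert (E : t * (2 * (b + 1)) = a - b) by (unfold t; field; lra).
  assert (0 <= t * b) by (apply Rmult_le_pos; lra). lra.
Qed.

Lemma Rzero_of_quadratic_le A S :
  0 <= A -> 0 <= S -> (forall t, 0 < t -> 2 * t * A <= t * t * A * S) -> A = 0.
Proof.
  intros HA HS H. set (t := / (S + 1)). assert (Ht : 0 < t) by (apply Rinv_0_lt_compat; lra).
  assert (HtS : t * S < 1) by (unfold t; apply (Rmult_lt_reg_r (S + 1)); [lra|];
    rewrite Rmult_assoc, (Rmult_comm S), <- Rmult_assoc, Rinv_l by lra; nra).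
  specialize (H t Ht). assert (HtA : 0 <= t * A) by (apply Rmult_le_pos; lra).
  assert (t * A * (t * S) <= t * A) by nra. assert (t * A <= 0) by nra. nra.
Qed.

Lemma Cauchy_crit_of_sq_bound (r : nat -> R) :
  (forall j k, (r j - r k) * (r j - r k) <= 2 * / (INR k + 1) + 2 * / (INR j + 1)) -> Cauchy_crit r.
Proof.
  intros H eps He. destruct (INR_archimed (eps * eps) 4) as [N HN]; [nra|].
  exists N. intros n m Hn Hm. unfold Rdist.
  pose proof (inv_succ_le n N Hn). pose proof (inv_succ_le m N Hm). pose proof (pos_INR N).
  assert (4 * / (INR N + 1) < eps * eps).
  { apply (Rmult_lt_reg_r (INR N + 1)); [lra|]. rewrite Rmult_assoc, Rinv_l by lra. nra. }
  specialize (H n m). destruct (Rcase_abs (r n - r m)); [rewrite Rabs_left | rewrite Rabs_right]; nra.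
Qed.

Lemma abs2_ssub_eq (a b : Seq) x :
  abs2 (ssub a b) x = (cre (a x) - cre (b x)) * (cre (a x) - cre (b x))
                      + (cim (a x) - cim (b x)) * (cim (a x) - cim (b x)).
Proof. unfold abs2, ssub, sadd, ssc, Cnorm2; simpl; ring. Qed.

Lemma abs2_parallelogram (v m1 m2 : Seq) x :
  abs2 (ssub m2 m1) x + 4 * abs2 (ssub v (ssc (RtoC (/2)) (sadd m1 m2))) x =
  2 * abs2 (ssub v m1) x + 2 * abs2 (ssub v m2) x.
Proof. unfold abs2, ssub, sadd, ssc, Cnorm2; simpl; field. Qed.

Lemma abs2_ssub_add_scal (v u m : Seq) (s : Cx) x :
  abs2 (ssub v (sadd u (ssc s m))) x =
  abs2 (ssub v u) x - 2 * cre (Cmul (Cconj s) (dotp (ssub v u) m x)) + Cnorm2 s * abs2 m x.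
Proof. unfold abs2, ssub, sadd, ssc, dotp, Cnorm2; simpl; ring. Qed.

Lemma abs2_ssub_weighted_le (v u m : Seq) t x : 0 < t ->
  abs2 (ssub v u) x <= (1 + t) * abs2 (ssub v m) x + (1 + / t) * abs2 (ssub m u) x.
Proof.
  intro Ht. unfold abs2.
  replace (ssub v u x) with (Cadd (ssub v m x) (ssub m u x))
    by (unfold ssub, sadd, ssc; apply Cx_ext; simpl; ring).
  apply Cnorm2_add_weighted_le; auto.
Qed.

(* The projection theorem onto the closed subspace [range T], proved directly:
   a minimizing sequence for the distance to [v] is Cauchy by the parallelogram law. *)
Section Projection.
Variables (T : Seq -> Seq) (O : l2_operator T)
  (Hcl : Defs.closed_set (@range Sp1 Sp1 (@l2 Sp1) T)) (v : Seq) (Sv : abs_summable (abs2 v)).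

Definition dist2 (m : Seq) : R := zsum (abs2 (ssub v m)).

Lemma abs_summable_dist m : in_range T m -> abs_summable (abs2 (ssub v m)).
Proof. intro Hm. apply abs_summable_abs2_sub; auto. apply (in_range_l2 T O); auto. Qed.

Lemma dist2_inf_exists : exists d, 0 <= d /\ (forall m, in_range T m -> d <= dist2 m) /\
  (forall del, del > 0 -> exists m, in_range T m /\ dist2 m < d + del).
Proof.
  set (E := fun y => exists m, in_range T m /\ y = - dist2 m).
  assert (Hnd : forall m, in_range T m -> 0 <= dist2 m)
    by (intros m Hm; apply zsum_ge0; auto using abs_summable_dist, abs2_ge0).
  assert (Hb : bound E) by (exists 0; intros y [m [Hm ->]]; specialize (Hnd m Hm); lra).
  assert (He : exists y, E y) by (exists (- dist2 szero); exists szero; auto using in_range_szero).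
  destruct (completeness E Hb He) as [L [HL1 HL2]].
  exists (- L). split; [|split].
  - assert (L <= 0) by (apply HL2; intros y [m [Hm ->]]; specialize (Hnd m Hm); lra). lra.
  - intros m Hm. assert (- dist2 m <= L) by (apply HL1; exists m; auto). lra.
  - intros del Hdel.
    destruct (excluded_middle_informative (exists m, in_range T m /\ dist2 m < - L + del)) as [Hx|Hx];
      auto.
    assert (L <= L - del); [|lra].
    apply HL2. intros y [m [Hm ->]].
    destruct (Rlt_le_dec (dist2 m) (- L + del)) as [Hl|Hl]; [exfalso; apply Hx; exists m; auto | lra].
Qed.

Section MinimizingSequence.
Variables (d : R) (Hd0 : 0 <= d) (Hlow : forall m, in_range T m -> d <= dist2 m)
  (Happrox : forall del, del > 0 -> exists m, in_range T m /\ dist2 m < d + del).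

Definition min_seq (k : nat) : Seq :=
  proj1_sig (constructive_indefinite_description _ (Happrox _ (inv_succ_pos k))).

Lemma min_seq_spec k : in_range T (min_seq k) /\ dist2 (min_seq k) < d + / (INR k + 1).
Proof. unfold min_seq; destruct constructive_indefinite_description; auto. Qed.

Lemma min_seq_l2 k : abs_summable (abs2 (min_seq k)).
Proof. apply (in_range_l2 T O), min_seq_spec. Qed.

Lemma min_seq_cauchy j k :
  zsum (abs2 (ssub (min_seq j) (min_seq k))) <= 2 * / (INR k + 1) + 2 * / (INR j + 1).
Proof.
  set (m1 := min_seq k). set (m2 := min_seq j). set (mid := ssc (RtoC (/2)) (sadd m1 m2)).
  assert (Mm : in_range T mid)
    by (apply (in_range_scal T O), (in_range_add T O); apply min_seq_spec).
  assert (S1 : abs_summable (abs2 (ssub v m1))) by (apply abs_summable_dist, min_seq_spec).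
  assert (S2 : abs_summable (abs2 (ssub v m2))) by (apply abs_summable_dist, min_seq_spec).
  assert (S3 : abs_summable (abs2 (ssub v mid))) by (apply abs_summable_dist; auto).
  assert (S4 : abs_summable (abs2 (ssub m2 m1))) by (apply abs_summable_abs2_sub; apply min_seq_l2).
  pose proof (zsum_ext _ _ (abs2_parallelogram v m1 m2)) as E.
  rewrite zsum_plus, zsum_scal, zsum_plus, zsum_scal, zsum_scal in E; try apply abs_summable_scal; auto.
  pose proof (Hlow mid Mm). destruct (min_seq_spec k) as [_ Hk]. destruct (min_seq_spec j) as [_ Hj].
  unfold dist2 in *. fold m1 in Hk. fold m2 in Hj. fold mid in E. lra.
Qed.

Lemma min_seq_cauchy_pointwise x :
  Cauchy_crit (fun k => cre (min_seq k x)) /\ Cauchy_crit (fun k => cim (min_seq k x)).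
Proof.
  assert (B : forall j k, abs2 (ssub (min_seq j) (min_seq k)) x <= 2 * / (INR k + 1) + 2 * / (INR j + 1)).
  { intros j k. eapply Rle_trans; [|apply (min_seq_cauchy j k)].
    apply le_zsum; [apply abs_summable_abs2_sub; apply min_seq_l2 | apply abs2_ge0]. }
  split; apply Cauchy_crit_of_sq_bound; intros j k; specialize (B j k); rewrite abs2_ssub_eq in B;
    pose proof (Rle_0_sqr (cim (min_seq j x) - cim (min_seq k x)));
    pose proof (Rle_0_sqr (cre (min_seq j x) - cre (min_seq k x))); unfold Rsqr in *; lra.
Qed.

Definition min_limit : Seq := fun x =>
  mkCx (proj1_sig (R_complete _ (proj1 (min_seq_cauchy_pointwise x))))
       (proj1_sig (R_complete _ (proj2 (min_seq_cauchy_pointwise x)))).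

Lemma min_limit_pointwise x :
  Un_cv (fun k => cre (min_seq k x)) (cre (min_limit x)) /\
  Un_cv (fun k => cim (min_seq k x)) (cim (min_limit x)).
Proof. unfold min_limit; simpl; split; destruct R_complete; auto. Qed.

Lemma min_seq_psumZ_le k N : psumZ (abs2 (ssub (min_seq k) min_limit)) N <= 2 * / (INR k + 1).
Proof.
  assert (CV1 : Un_cv (fun j => psumZ (abs2 (ssub (min_seq k) (min_seq j))) N)
                      (psumZ (abs2 (ssub (min_seq k) min_limit)) N)).
  { apply psumZ_pointwise_cv. intro x. destruct (min_limit_pointwise x) as [Ure Uim].
    rewrite abs2_ssub_eq.
    apply (Un_cv_ext (fun j =>
      (cre (min_seq k x) - cre (min_seq j x)) * (cre (min_seq k x) - cre (min_seq j x))
      + (cim (min_seq k x) - cim (min_seq j x)) * (cim (min_seq k x) - cim (min_seq j x))));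
      [intro j; symmetry; apply abs2_ssub_eq|].
    apply CV_plus; apply CV_mult; apply CV_minus; auto using Un_cv_const. }
  assert (CV2 : Un_cv (fun j => 2 * / (INR j + 1) + 2 * / (INR k + 1)) (2 * 0 + 2 * / (INR k + 1)))
    by (apply CV_plus; [apply CV_mult; [apply Un_cv_const | apply Un_cv_inv_succ] | apply Un_cv_const]).
  replace (2 * / (INR k + 1)) with (2 * 0 + 2 * / (INR k + 1)) by ring.
  apply (Rle_cv_lim (fun j => Rle_trans _ _ _
    (psumZ_le_zsum _ N (abs_summable_abs2_sub _ _ (min_seq_l2 k) (min_seq_l2 j)) (abs2_ge0 _))
    (min_seq_cauchy k j)) CV1 CV2).
Qed.

Lemma min_seq_cv k :
  abs_summable (abs2 (ssub (min_seq k) min_limit)) /\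
  zsum (abs2 (ssub (min_seq k) min_limit)) <= 2 * / (INR k + 1).
Proof.
  assert (S : abs_summable (abs2 (ssub (min_seq k) min_limit)))
    by (apply (abs_summable_of_nonneg _ _ (abs2_ge0 _) (min_seq_psumZ_le k))).
  split; auto. apply zsum_le_of_psumZ_le; auto using min_seq_psumZ_le.
Qed.

Lemma min_limit_l2 : abs_summable (abs2 min_limit).
Proof.
  apply (abs_summable_dominated _
           (fun x => 2 * abs2 (min_seq 0) x + 2 * abs2 (ssub (min_seq 0) min_limit) x)).
  - intro x; split; [apply abs2_ge0|]. unfold abs2.
    replace (min_limit x) with (Cadd (min_seq 0 x) (Cmul (RtoC (-1)) (ssub (min_seq 0) min_limit x)))
      by (unfold ssub, sadd, ssc; apply Cx_ext; simpl; ring).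
    pose proof (Cnorm2_add_le (min_seq 0 x) (Cmul (RtoC (-1)) (ssub (min_seq 0) min_limit x))) as H.
    rewrite Cnorm2_mul, Cnorm2_RtoC in H. lra.
  - apply abs_summable_plus; apply abs_summable_scal; [apply min_seq_l2 | apply min_seq_cv].
Qed.

Lemma min_limit_in_range : in_range T min_limit.
Proof.
  apply in_range_iff, (Hcl min_seq);
    [intro k; apply in_range_iff, min_seq_spec | apply l2_Sp1_iff, min_limit_l2|].
  intros eps He. destruct (inv_succ_lt_eventually eps 2 He) as [K HK]. exists K. intros k Hk.
  apply sumsq_le_Sp1_iff. destruct (min_seq_cv k) as [S1 S2]. split; auto.
  eapply Rle_trans; [exact S2 | apply HK; auto].
Qed.

Lemma min_limit_dist2_le : dist2 min_limit <= d.
Proof.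
  apply Rle_of_le_mul_all; auto. intros t Ht.
  assert (Hk : forall k, dist2 min_limit <= (1 + t) * (d + / (INR k + 1)) + (1 + / t) * (2 * / (INR k + 1))).
  { intro k. destruct (min_seq_spec k) as [Mk Hk]. destruct (min_seq_cv k) as [Sk Hk2].
    apply Rle_trans with ((1 + t) * dist2 (min_seq k) + (1 + / t) * zsum (abs2 (ssub (min_seq k) min_limit))).
    - unfold dist2. rewrite <- !zsum_scal, <- zsum_plus;
        try apply abs_summable_scal; auto using abs_summable_dist.
      apply zsum_le;
        [apply abs_summable_dist, min_limit_in_range | | intro x; apply abs2_ssub_weighted_le; auto].
      apply abs_summable_plus; apply abs_summable_scal; auto using abs_summable_dist.
    - assert (0 < / t) by (apply Rinv_0_lt_compat; auto).
      apply Rplus_le_compat; apply Rmult_le_compat_l; lra. }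
  assert (CV : Un_cv (fun k => (1 + t) * (d + / (INR k + 1)) + (1 + / t) * (2 * / (INR k + 1)))
                     ((1 + t) * (d + 0) + (1 + / t) * (2 * 0))).
  { pose proof Un_cv_inv_succ.
    apply CV_plus; apply CV_mult; auto using Un_cv_const;
      [apply CV_plus | apply CV_mult]; auto using Un_cv_const. }
  replace ((1 + t) * d) with ((1 + t) * (d + 0) + (1 + / t) * (2 * 0)) by ring.
  apply (@Rle_cv_lim (fun _ => dist2 min_limit) _ _ _ Hk (Un_cv_const _) CV).
Qed.

End MinimizingSequence.

(* Minimality of [u] forces [v - u] to be orthogonal to [range T]: otherwise moving
   [u] slightly along [m] would decrease the distance. *)
Lemma nearest_orthogonal u : in_range T u -> (forall m, in_range T m -> dist2 u <= dist2 m) ->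
  forall m, in_range T m -> czsum (dotp (ssub v u) m) = C0.
Proof.
  intros Mu Hmin m Hm.
  set (w := ssub v u). set (a := czsum (dotp w m)). set (Sm := zsum (abs2 m)).
  assert (Smm : abs_summable (abs2 m)) by (apply (in_range_l2 T O); auto).
  assert (Sw : abs_summable (abs2 w)) by (apply abs_summable_dist; auto).
  assert (Cwm : csummable (dotp w m)) by (apply csummable_dotp; auto).
  assert (Key : forall t, 0 < t -> 2 * t * Cnorm2 a <= t * t * Cnorm2 a * Sm).
  { intros t Ht. set (s := Cmul (RtoC t) a).
    assert (Ms : in_range T (sadd u (ssc s m)))
      by (apply (in_range_add T O); auto; apply (in_range_scal T O); auto).
    pose proof (Hmin _ Ms) as Hd.
    assert (E : dist2 (sadd u (ssc s m)) = dist2 u - 2 * (t * Cnorm2 a) + t * t * Cnorm2 a * Sm).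
    { unfold dist2. rewrite (zsum_ext _ _ (abs2_ssub_add_scal v u m s)).
      destruct (csummable_scal (Cconj s) _ Cwm) as [Cr _].
      rewrite (zsum_ext _ (fun x => (abs2 (ssub v u) x + (-2) * cre (Cmul (Cconj s) (dotp (ssub v u) m x)))
                                    + Cnorm2 s * abs2 m x)) by (intro; ring).
      rewrite zsum_plus; [|apply abs_summable_plus; [exact Sw | apply abs_summable_scal; exact Cr]
                         | apply abs_summable_scal; exact Smm].
      rewrite zsum_plus; [|exact Sw | apply abs_summable_scal; exact Cr].
      rewrite (zsum_scal _ (-2)) by exact Cr. rewrite (zsum_scal (abs2 m)) by exact Smm.
      change (zsum (fun x => cre (Cmul (Cconj s) (dotp (ssub v u) m x))))
        with (cre (czsum (fun x => Cmul (Cconj s) (dotp w m x)))).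
      rewrite czsum_scal by auto. fold a. unfold s, Cnorm2; simpl. fold Sm. unfold w. ring. }
    lra. }
  apply Cnorm2_eq0, (Rzero_of_quadratic_le _ Sm); auto using Cnorm2_ge0.
  apply zsum_ge0; auto using abs2_ge0.
Qed.

Lemma projection_onto_range :
  exists u, in_range T u /\ forall m, in_range T m -> czsum (dotp (ssub v u) m) = C0.
Proof.
  destruct dist2_inf_exists as (d & Hd0 & Hlow & Happrox).
  exists (min_limit d Hlow Happrox). split; [apply min_limit_in_range|].
  apply nearest_orthogonal; [apply min_limit_in_range|].
  intros m Hm. eapply Rle_trans; [apply min_limit_dist2_le | apply Hlow]; auto.
Qed.

End Projection.

Definition adjoint_pair (T S : Seq -> Seq) : Prop :=
  forall g h, abs_summable (abs2 g) -> abs_summable (abs2 h) ->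
  czsum (dotp (T g) h) = czsum (dotp g (S h)).

Section Adjoint.
Variables (T S : Seq -> Seq) (OT : l2_operator T) (OS : l2_operator S) (Hadj : adjoint_pair T S).

Lemma adjoint_pair_sym : adjoint_pair S T.
Proof.
  intros h f Sh Sf.
  rewrite (czsum_dotp_conj f (S h) Sf (op_l2 _ OS h Sh)), (czsum_dotp_conj (T f) h (op_l2 _ OT f Sf) Sh).
  rewrite Hadj; auto.
Qed.

Lemma kernel_adjoint_orthogonal h : abs_summable (abs2 h) -> S h = szero ->
  forall m, in_range T m -> czsum (dotp h m) = C0.
Proof.
  intros Sh E m [f [Sf ->]]. rewrite <- adjoint_pair_sym, E; auto. apply czsum_dotp_szero.
Qed.

Lemma orthogonal_kernel_adjoint w : abs_summable (abs2 w) ->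
  (forall m, in_range T m -> czsum (dotp w m) = C0) -> S w = szero.
Proof.
  intros Sw H. apply czsum_dotp_self_eq0; [apply OS; auto|].
  rewrite adjoint_pair_sym; auto; [|apply OS; auto].
  apply H. exists (S w); split; auto. apply OS; auto.
Qed.

(* [S T g = 0] gives [<T g, T g> = <g, S T g> = 0]. *)
Lemma adjoint_comp_kernel g : abs_summable (abs2 g) -> S (T g) = szero -> T g = szero.
Proof.
  intros Sg E. apply czsum_dotp_self_eq0; [apply OT; auto|].
  rewrite Hadj, E; auto; [|apply OT; auto].
  rewrite <- czsum_zero. apply czsum_ext; intro; unfold dotp, szero, C0; apply Cx_ext; simpl; ring.
Qed.

End Adjoint.

Lemma lincomb_l2 (cs : list Cx) (vs : list Seq) :
  Forall (fun v => abs_summable (abs2 v)) vs -> abs_summable (abs2 (@lincomb Sp1 cs vs)).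
Proof.
  revert vs; induction cs as [|c cs IH]; intros [|v vs] HF; simpl; try apply abs2_szero.
  inversion HF; subst. apply abs_summable_abs2_comb; auto.
Qed.

Lemma lincomb_orthogonal (cs : list Cx) (ws : list Seq) m : abs_summable (abs2 m) ->
  Forall (fun w => abs_summable (abs2 w) /\ czsum (dotp w m) = C0) ws ->
  czsum (dotp (@lincomb Sp1 cs ws) m) = C0.
Proof.
  intros Sm. revert ws; induction cs as [|c cs IH]; intros [|w ws] HF; simpl;
    try apply czsum_dotp_szero.
  inversion HF as [|? ? [Sw Pw] HF']; subst.
  rewrite czsum_dotp_comb; auto.
  - rewrite Pw, IH; auto. apply Cx_ext; simpl; ring.
  - apply lincomb_l2. eapply Forall_impl; [|exact HF']. intros a [Ha _]; exact Ha.
Qed.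

Lemma lincomb_ssub (cs : list Cx) (vs us : list Seq) : length vs = length us ->
  @lincomb Sp1 cs (map (fun p => ssub (fst p) (snd p)) (combine vs us)) =
  ssub (@lincomb Sp1 cs vs) (@lincomb Sp1 cs us).
Proof.
  revert vs us; induction cs as [|c cs IH]; intros [|v vs] [|u us] Hl; simpl in *; try discriminate;
    try (apply Seq_ext; intro; unfold ssub, sadd, ssc, szero, C0; apply Cx_ext; simpl; ring).
  rewrite IH by lia. apply Seq_ext; intro; unfold ssub, sadd, ssc; apply Cx_ext; simpl; ring.
Qed.

Lemma ssub_eq0 (f g : Seq) : ssub f g = szero -> f = g.
Proof.
  intro E. apply Seq_ext; intro x. apply (f_equal (fun h => h x)) in E.
  unfold ssub, sadd, ssc, szero, C0 in E.
  apply Cx_ext; [apply (f_equal cre) in E | apply (f_equal cim) in E]; simpl in E; lra.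
Qed.

Lemma Forall2_In_combine {A B : Type} (P : A -> B -> Prop) l1 l2 a b :
  Forall2 P l1 l2 -> In (a, b) (combine l1 l2) -> P a b.
Proof. intro H; induction H; simpl; [tauto|]. intros [E|Hin]; [inversion E; subst|]; auto. Qed.

Section Duality.
Variables (T S : Seq -> Seq) (OT : l2_operator T) (OS : l2_operator S) (Hadj : adjoint_pair T S)
  (Hcl : Defs.closed_set (@range Sp1 Sp1 (@l2 Sp1) T)).

Lemma projections_onto_range (vs : list Seq) : Forall (fun v => abs_summable (abs2 v)) vs ->
  exists us, Forall2 (fun v u => in_range T u /\
    forall m, in_range T m -> czsum (dotp (ssub v u) m) = C0) vs us.
Proof.
  intro HF; induction HF as [|v vs Hv HF IH]; [exists nil; constructor|].
  destruct IH as [us Hus]. destruct (projection_onto_range T OT Hcl v Hv) as [u Hu].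
  exists (u :: us); constructor; auto.
Qed.

(* Projecting a basis [vs] of a complement of [range T] along [range T] gives the
   residuals [ws = vs - us], which form a basis of [ker S = (range T)^perp]. *)
Lemma codim_range_dim_kernel_adjoint c :
  codim_is (@range Sp1 Sp1 (@l2 Sp1) T) (@l2 Sp1) c -> dim_is (@kernel Sp1 Sp1 (@l2 Sp1) S) c.
Proof.
  intros (vs & Hl & HF & Hi & Hs).
  assert (HF' : Forall (fun v => abs_summable (abs2 v)) vs)
    by (eapply Forall_impl; [|exact HF]; intros; apply l2_Sp1_iff; auto).
  destruct (projections_onto_range vs HF') as [us Hus].
  assert (Hlen : length vs = length us) by (eapply Forall2_length; eauto).
  assert (HM : Forall (in_range T) us) by (clear - Hus; induction Hus; constructor; tauto).
  set (ws := map (fun p => ssub (fst p) (snd p)) (combine vs us)).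
  assert (Hwl : length ws = c) by (unfold ws; rewrite length_map, length_combine, <- Hlen, Nat.min_id; auto).
  assert (Hws : Forall (fun w => abs_summable (abs2 w) /\
                                 forall m, in_range T m -> czsum (dotp w m) = C0) ws).
  { unfold ws. apply Forall_map, Forall_forall. intros [v u] Hin. simpl.
    destruct (Forall2_In_combine _ _ _ _ _ Hus Hin) as [Mu Pu]. split; auto.
    apply abs_summable_abs2_sub; [|apply (in_range_l2 T OT); auto].
    apply (proj1 (Forall_forall _ _) HF' v), (in_combine_l _ _ _ _ Hin). }
  exists ws. repeat split; auto.
  - eapply Forall_impl; [|exact Hws]. intros w [Sw Pw].
    split; [apply l2_Sp1_iff; auto | apply (orthogonal_kernel_adjoint T S OT OS Hadj); auto].
  - intros cs Hcs Hz. apply Hi; [rewrite Hcs; exact Hwl|].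
    unfold ws in Hz. rewrite lincomb_ssub in Hz by auto. apply ssub_eq0 in Hz.
    rewrite Hz. apply in_range_iff, in_range_lincomb; auto.
  - intros f [Hf Ef]. destruct (Hs f Hf) as (cs & r & Hcs & Hr & E).
    exists cs; split; auto.
    apply l2_Sp1_iff in Hf. apply in_range_iff in Hr.
    set (L := @lincomb Sp1 cs ws).
    assert (SL : abs_summable (abs2 L))
      by (apply lincomb_l2; eapply Forall_impl; [|exact Hws]; intros a [Ha _]; exact Ha).
    assert (Edd : ssub f L = sadd r (@lincomb Sp1 cs us)).
    { unfold L, ws. rewrite lincomb_ssub, E by auto.
      apply Seq_ext; intro; unfold ssub, sadd, ssc; simpl; apply Cx_ext; simpl; ring. }
    apply ssub_eq0, czsum_dotp_self_eq0; [apply abs_summable_abs2_sub; auto|].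
    assert (Mdd : in_range T (ssub f L))
      by (rewrite Edd; apply (in_range_add T OT); auto; apply in_range_lincomb; auto).
    pose proof (in_range_l2 T OT _ Mdd) as Sm.
    rewrite czsum_dotp_sub; auto.
    rewrite (kernel_adjoint_orthogonal T S OT OS Hadj f Hf Ef _ Mdd).
    unfold L. rewrite lincomb_orthogonal; auto.
    + apply Cx_ext; simpl; ring.
    + eapply Forall_impl; [|exact Hws]. intros w [Sw Pw]; split; auto.
Qed.

End Duality.

Definition upper_l2 (f : Sp2) : Prop := l2 f /\ snd f = szero.
Definition lower_l2 (f : Sp2) : Prop := l2 f /\ fst f = szero.
Definition inj1 (g : Sp1) : Sp2 := (g, szero).
Definition inj2 (g : Sp1) : Sp2 := (szero, g).

Lemma sadd_szero_szero : sadd szero szero = szero.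
Proof. apply Seq_ext; intro; unfold sadd, szero, C0; apply Cx_ext; simpl; ring. Qed.

Lemma ssc_szero c : ssc c szero = szero.
Proof. apply Seq_ext; intro; unfold ssc, szero, C0; apply Cx_ext; simpl; ring. Qed.

Lemma ssc_neg_self_eq0 (s : Seq) : s = ssc (RtoC (-1)) s -> s = szero.
Proof.
  intro E. apply Seq_ext; intro x. apply (f_equal (fun f => f x)) in E. unfold ssc, szero, C0 in *.
  apply Cx_ext; [apply (f_equal cre) in E | apply (f_equal cim) in E]; simpl in *; lra.
Qed.

Lemma inj1_lin_pair : lin_pair inj1 (fun y : Sp2 => (fst y : Sp1)).
Proof. split; simpl; auto; intros; unfold inj1; simpl; rewrite ?sadd_szero_szero, ?ssc_szero; auto. Qed.

Lemma inj2_lin_pair : lin_pair inj2 (fun y : Sp2 => (snd y : Sp1)).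
Proof. split; simpl; auto; intros; unfold inj2; simpl; rewrite ?sadd_szero_szero, ?ssc_szero; auto. Qed.

Lemma inj1_iso : l2_iso (@l2 Sp1) upper_l2 inj1 (fun y : Sp2 => (fst y : Sp1)).
Proof.
  destruct abs2_szero as [Z1 Z2]. split.
  - apply inj1_lin_pair.
  - intros [y1 y2] [_ Hy]; simpl in *; subst; reflexivity.
  - intros x Hx; split; auto. apply l2_Sp2_iff; simpl; split; auto. apply l2_Sp1_iff; auto.
  - intros [y1 y2] [Hy _]; simpl. apply l2_Sp2_iff in Hy; apply l2_Sp1_iff; tauto.
  - intros x r Hx. apply sumsq_le_Sp1_iff in Hx. apply sumsq_le_Sp2_iff; simpl.
    destruct Hx; repeat split; auto; lra.
  - intros [y1 y2] r Hy. apply sumsq_le_Sp2_iff in Hy. simpl in *. apply sumsq_le_Sp1_iff.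
    destruct Hy as (A & B & C). pose proof (zsum_ge0 _ B (abs2_ge0 y2)). split; auto; lra.
Qed.

Lemma inj2_iso : l2_iso (@l2 Sp1) lower_l2 inj2 (fun y : Sp2 => (snd y : Sp1)).
Proof.
  destruct abs2_szero as [Z1 Z2]. split.
  - apply inj2_lin_pair.
  - intros [y1 y2] [_ Hy]; simpl in *; subst; reflexivity.
  - intros x Hx; split; auto. apply l2_Sp2_iff; simpl; split; auto. apply l2_Sp1_iff; auto.
  - intros [y1 y2] [Hy _]; simpl. apply l2_Sp2_iff in Hy; apply l2_Sp1_iff; tauto.
  - intros x r Hx. apply sumsq_le_Sp1_iff in Hx. apply sumsq_le_Sp2_iff; simpl.
    destruct Hx; repeat split; auto; lra.
  - intros [y1 y2] r Hy. apply sumsq_le_Sp2_iff in Hy. simpl in *. apply sumsq_le_Sp1_iff.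
    destruct Hy as (A & B & C). pose proof (zsum_ge0 _ A (abs2_ge0 y1)). split; auto; lra.
Qed.

Lemma lower_l2_closed : Defs.closed_set lower_l2.
Proof.
  intros gs g Hgs Hg Hc. split; auto. apply Seq_ext; intro x.
  apply Cnorm2_eq0, Rle_antisym; [|apply Cnorm2_ge0].
  apply Rnot_lt_le; intro Hlt. assert (He : Cnorm2 (fst g x) / 2 > 0) by lra.
  destruct (Hc _ He) as [K HK]. specialize (HK K (le_n K)).
  apply sumsq_le_Sp2_iff in HK. destruct HK as (S1 & S2 & HK). simpl in *.
  pose proof (zsum_ge0 _ S2 (abs2_ge0 _)).
  pose proof (le_zsum _ x S1 (abs2_ge0 _)) as P.
  replace (abs2 (sadd (fst (gs K)) (ssc (RtoC (-1)) (fst g))) x) with (Cnorm2 (fst g x)) in P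
    by (destruct (Hgs K) as [_ ->]; unfold abs2, sadd, ssc, szero, C0, Cnorm2; simpl; ring).
  lra.
Qed.

Section SplitStep.
Variables (p : R) (q : Cx) (th : R) (a1 a2 : Z -> R) (b : Z -> Cx).
Hypotheses (G : polar_params p q th) (Hp : -1 <= p <= 1) (Hq1 : Cmod q <= 1) (Hc : coin_bounded a1 a2 b).

Let G1 := proj1 G.
Let G2 := proj1 (proj2 G).

Lemma epsinv_Gam y : epsinv p th (Gam p q y) = grading (epsinv p th y).
Proof.
  rewrite <- (eps_epsinv p th G1 G2 y) at 1. rewrite (Gam_eps p q th G). apply epsinv_eps; auto.
Qed.

Lemma eps_iso_Hplus : l2_iso upper_l2 (Hplus p q) (epsop p th) (epsinv p th).
Proof.
  split.
  - apply eps_lin_pair; auto.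
  - intros y _; apply eps_epsinv; auto.
  - intros [x1 x2] [Hx Ex]; simpl in Ex; subst. split; [apply eps_l2; auto|].
    rewrite (Gam_eps p q th G). unfold grading; simpl. rewrite ssc_szero; auto.
  - intros y [Hy Ey]. split; [apply epsinv_l2; auto|].
    apply ssc_neg_self_eq0. pose proof (epsinv_Gam y) as E. rewrite Ey in E.
    apply (f_equal snd) in E. exact E.
  - intros; apply eps_sumsq_le; auto.
  - intros; apply epsinv_sumsq_le; auto.
Qed.

Lemma eps_iso_Hminus : l2_iso lower_l2 (Hminus p q) (epsop p th) (epsinv p th).
Proof.
  pose proof (eps_lin_pair p th G1 G2) as L. split.
  - exact L.
  - intros y _; apply eps_epsinv; auto.
  - intros [x1 x2] [Hx Ex]; simpl in Ex; subst. split; [apply eps_l2; auto|].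
    rewrite (Gam_eps p q th G), <- (lin_sc _ _ L). f_equal. unfold grading; simpl. rewrite ssc_szero; auto.
  - intros y [Hy Ey]. split; [apply epsinv_l2; auto|].
    apply ssc_neg_self_eq0. pose proof (epsinv_Gam y) as E. rewrite Ey, (inv_sc _ _ L) in E.
    apply (f_equal fst) in E. symmetry; exact E.
  - intros; apply eps_sumsq_le; auto.
  - intros; apply epsinv_sumsq_le; auto.
Qed.

Lemma Hminus_closed : Defs.closed_set (Hminus p q).
Proof.
  pose proof eps_iso_Hminus as I. intros gs g Hgs Hg Hc'.
  rewrite <- (eps_epsinv p th G1 G2 g). apply I.
  apply (lower_l2_closed (fun k => epsinv p th (gs k))).
  - intro k; apply I; auto.
  - destruct Hg as [r Hr]; exists r; apply I; auto.
  - apply (l2_conv_transfer_inv _ _ _ _ I); auto.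
Qed.

Lemma Qop_szero : Qop p q a1 a2 b vzero = vzero.
Proof.
  apply Seq2_ext; intro x; apply Cx_ext;
    unfold Qop, Gam, Coin, vsub, ssub, sadd, ssc, smul, Lsh, Lsh_adj, szero, C0; simpl; ring.
Qed.

Lemma Qblock_inj1 g : Qblock p q th a1 a2 b (inj1 g) = inj2 (Qeps_p p q th a1 a2 b g).
Proof. unfold Qblock, inj1, inj2, Qeps_m; simpl. rewrite Qeps_szero; auto. Qed.

Lemma Qblock_inj2 g : Qblock p q th a1 a2 b (inj2 g) = inj1 (Qeps_m p q th a1 a2 b g).
Proof. unfold Qblock, inj1, inj2, Qeps_p; simpl. rewrite Qeps_szero; auto. Qed.

Lemma Qeps_operator sg : sg * sg = 1 -> l2_operator (Qeps sg p q th a1 a2 b).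
Proof. intro Hsg. split; [apply Qeps_l2; auto | apply Qeps_linear | apply Qeps_szero]. Qed.

Lemma Qeps_p_operator : l2_operator (Qeps_p p q th a1 a2 b).
Proof. apply Qeps_operator; ring. Qed.

Lemma Qeps_m_operator : l2_operator (Qeps_m p q th a1 a2 b).
Proof. apply Qeps_operator; ring. Qed.

Lemma Qeps_adjoint_pair : adjoint_pair (Qeps_p p q th a1 a2 b) (Qeps_m p q th a1 a2 b).
Proof. intros g h Sg Sh; apply Qeps_adjoint; auto. Qed.

Lemma Qblock_l2 f : l2 f -> l2 (Qblock p q th a1 a2 b f).
Proof.
  intro Hf. apply l2_Sp2_iff in Hf. apply l2_Sp2_iff.
  split; [apply Qeps_m_operator | apply Qeps_p_operator]; tauto.
Qed.

Lemma Qop_eps_inner f g : l2 f -> l2 g ->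
  exists z, inner_is (Qop p q a1 a2 b (epsop p th f)) (epsop p th g) z /\
            inner_is (Qblock p q th a1 a2 b f) g z.
Proof.
  intros Hf Hg. exists (czsum (dotp2 (Qblock p q th a1 a2 b f) g)).
  rewrite (Qop_eps p q th a1 a2 b G).
  split; apply inner_is_iff; auto using eps_l2, Qblock_l2.
  rewrite eps_dotp2_czsum; auto using Qblock_l2.
Qed.

Lemma SUSY_Fredholm_iff_block :
  SUSY_Fredholm p q a1 a2 b <-> Fredholm upper_l2 lower_l2 (Qblock p q th a1 a2 b).
Proof.
  unfold SUSY_Fredholm. symmetry.
  apply (Fredholm_transfer _ _ _ _ _ _ _ _ _ _ eps_iso_Hplus eps_iso_Hminus).
  - intro; apply Qop_eps; auto.
  - apply Hminus_closed.
Qed.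

Lemma block_Fredholm_iff : Fredholm upper_l2 lower_l2 (Qblock p q th a1 a2 b) <->
  Fredholm (@l2 Sp1) (@l2 Sp1) (Qeps_p p q th a1 a2 b).
Proof.
  symmetry. apply (Fredholm_transfer _ _ _ _ _ _ _ _ _ _ inj1_iso inj2_iso).
  - intro; apply Qblock_inj1.
  - apply lower_l2_closed.
Qed.

Lemma SUSY_Fredholm_iff : SUSY_Fredholm p q a1 a2 b <-> Fredholm (@l2 Sp1) (@l2 Sp1) (Qeps_p p q th a1 a2 b).
Proof. rewrite SUSY_Fredholm_iff_block. apply block_Fredholm_iff. Qed.

Lemma kernel_Hplus_dim n :
  dim_is (kernel (@l2 Sp1) (Qeps_p p q th a1 a2 b)) n -> dim_is (kernel (Hplus p q) (Qop p q a1 a2 b)) n.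
Proof.
  intro H.
  apply (kernel_dim_transfer _ _ (Qblock p q th a1 a2 b) _ _ _ _ _ eps_iso_Hplus (eps_lin_pair p th G1 G2));
    [intro; apply Qop_eps; auto|].
  apply (kernel_dim_transfer _ _ (Qeps_p p q th a1 a2 b) _ _ _ _ _ inj1_iso inj2_lin_pair); auto.
  intro; apply Qblock_inj1.
Qed.

Lemma kernel_Hminus_dim n :
  dim_is (kernel (@l2 Sp1) (Qeps_m p q th a1 a2 b)) n -> dim_is (kernel (Hminus p q) (Qop p q a1 a2 b)) n.
Proof.
  intro H.
  apply (kernel_dim_transfer _ _ (Qblock p q th a1 a2 b) _ _ _ _ _ eps_iso_Hminus (eps_lin_pair p th G1 G2));
    [intro; apply Qop_eps; auto|].
  apply (kernel_dim_transfer _ _ (Qeps_m p q th a1 a2 b) _ _ _ _ _ inj2_iso inj1_lin_pair); auto.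
  intro; apply Qblock_inj2.
Qed.

(* On [H_+], [Q^2 f = 0] forces [Q f = 0]: in the [eps] picture [Q^2] is
   [Qeps_m Qeps_p] on the first component, and [Qeps_m] is the adjoint of [Qeps_p]. *)
Lemma kerHplus_iff f : kerHplus p q a1 a2 b f <-> kernel (Hplus p q) (Qop p q a1 a2 b) f.
Proof.
  pose proof (eps_lin_pair p th G1 G2) as L. unfold kerHplus, kernel. split.
  - intros [Hf Ef]. split; auto.
    set (g := fst (epsinv p th f)).
    assert (Ef' : f = epsop p th (inj1 g)).
    { unfold g. rewrite (iso_right _ _ _ _ inj1_iso); [symmetry; apply eps_epsinv; auto|].
      apply eps_iso_Hplus; auto. }
    assert (Sg : abs_summable (abs2 g)) by (apply l2_Sp1_iff; unfold g; apply inj1_iso, eps_iso_Hplus; auto).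
    rewrite Ef' in Ef |- *. rewrite !(Qop_eps p q th a1 a2 b G), Qblock_inj1 in *.
    rewrite Qblock_inj2 in Ef.
    apply (f_equal (epsinv p th)) in Ef. rewrite epsinv_eps, (inv_zero _ _ L) in Ef by auto.
    apply (f_equal fst) in Ef. simpl in Ef.
    rewrite (adjoint_comp_kernel _ _ Qeps_p_operator Qeps_adjoint_pair g Sg Ef). apply L.
  - intros [Hf Ef]. split; auto. rewrite Ef. apply Qop_szero.
Qed.

Lemma kerHminus_iff f : kerHminus p q a1 a2 b f <-> kernel (Hminus p q) (Qop p q a1 a2 b) f.
Proof.
  pose proof (eps_lin_pair p th G1 G2) as L. unfold kerHminus, kernel. split.
  - intros [Hf Ef]. split; auto.
    set (g := snd (epsinv p th f)).
    assert (Ef' : f = epsop p th (inj2 g)).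
    { unfold g. rewrite (iso_right _ _ _ _ inj2_iso); [symmetry; apply eps_epsinv; auto|].
      apply eps_iso_Hminus; auto. }
    assert (Sg : abs_summable (abs2 g)) by (apply l2_Sp1_iff; unfold g; apply inj2_iso, eps_iso_Hminus; auto).
    rewrite Ef' in Ef |- *. rewrite !(Qop_eps p q th a1 a2 b G), Qblock_inj2 in *.
    rewrite Qblock_inj1 in Ef.
    apply (f_equal (epsinv p th)) in Ef. rewrite epsinv_eps, (inv_zero _ _ L) in Ef by auto.
    apply (f_equal snd) in Ef. simpl in Ef.
    pose proof (adjoint_pair_sym _ _ Qeps_p_operator Qeps_m_operator Qeps_adjoint_pair) as Hadj.
    rewrite (adjoint_comp_kernel _ _ Qeps_m_operator Hadj g Sg Ef).
    apply L.
  - intros [Hf Ef]. split; auto. rewrite Ef. apply Qop_szero.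
Qed.

Lemma SUSY_index : SUSY_Fredholm p q a1 a2 b ->
  exists (n1 n2 k1 k2 : nat) (k : Z),
    dim_is (kerHplus p q a1 a2 b) n1 /\ dim_is (kerHminus p q a1 a2 b) n2 /\
    index_is (@l2 Sp1) (@l2 Sp1) (Qeps_p p q th a1 a2 b) k /\
    dim_is (kernel (@l2 Sp1) (Qeps_p p q th a1 a2 b)) k1 /\
    dim_is (kernel (@l2 Sp1) (Qeps_m p q th a1 a2 b)) k2 /\
    (Z.of_nat n1 - Z.of_nat n2)%Z = k /\ k = (Z.of_nat k1 - Z.of_nat k2)%Z.
Proof.
  intro HF. apply SUSY_Fredholm_iff in HF. destruct HF as (_ & _ & [k1 Hk1] & Hcl & [c Hcd]).
  pose proof (codim_range_dim_kernel_adjoint _ _ Qeps_p_operator Qeps_m_operator Qeps_adjoint_pair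
                Hcl c Hcd) as Hk2.
  exists k1, c, k1, c, (Z.of_nat k1 - Z.of_nat c)%Z. repeat split; auto.
  - apply (dim_is_ext (kernel (Hplus p q) (Qop p q a1 a2 b))); [intro; symmetry; apply kerHplus_iff|].
    apply kernel_Hplus_dim; auto.
  - apply (dim_is_ext (kernel (Hminus p q) (Qop p q a1 a2 b))); [intro; symmetry; apply kerHminus_iff|].
    apply kernel_Hminus_dim; auto.
  - exists k1, c. auto.
Qed.

End SplitStep.

Theorem theorem3p1 (p : R) (q : Cx) (theta : R) (a1 a2 : Z -> R) (b : Z -> Cx)
  (Hq : q <> C0)
  (Hpq : p ^ 2 + Cmod q ^ 2 = 1)
  (Htheta : Arg_is q theta)
  (Hab1 : forall x, a1 x ^ 2 + Cmod (b x) ^ 2 = 1)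
  (Hab2 : forall x, a2 x ^ 2 + Cmod (b x) ^ 2 = 1)
  (Hb : forall x, Cmul (b x) (RtoC (a1 x + a2 x)) = C0) :
  unitary (epsop p theta) /\
  (forall f g : Sp2, l2 f -> l2 g ->
     exists z, inner_is (Qop p q a1 a2 b (epsop p theta f)) (epsop p theta g) z /\
               inner_is (Qblock p q theta a1 a2 b f) g z) /\
  (SUSY_Fredholm p q a1 a2 b <-> Fredholm (@l2 Sp1) (@l2 Sp1) (Qeps_p p q theta a1 a2 b)) /\
  (SUSY_Fredholm p q a1 a2 b ->
     exists (n1 n2 k1 k2 : nat) (k : Z),
       dim_is (kerHplus p q a1 a2 b) n1 /\ dim_is (kerHminus p q a1 a2 b) n2 /\
       index_is (@l2 Sp1) (@l2 Sp1) (Qeps_p p q theta a1 a2 b) k /\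
       dim_is (kernel (@l2 Sp1) (Qeps_p p q theta a1 a2 b)) k1 /\
       dim_is (kernel (@l2 Sp1) (Qeps_m p q theta a1 a2 b)) k2 /\
       (Z.of_nat n1 - Z.of_nat n2)%Z = k /\
       k = (Z.of_nat k1 - Z.of_nat k2)%Z).
Proof.
  pose proof (polar_params_of_Arg p q theta Hpq Htheta) as G.
  pose proof (sqrt_pos (Cnorm2 q)) as Hq0; fold (Cmod q) in Hq0.
  assert (Hp : -1 <= p <= 1) by (split; nra).
  assert (Hq1 : Cmod q <= 1) by nra.
  pose proof (coin_bounded_of_unit a1 a2 b Hab1 Hab2) as Hc.
  split; [apply eps_unitary; apply G|].
  split; [intros; apply Qop_eps_inner; auto|].
  split; [apply SUSY_Fredholm_iff | apply SUSY_index]; auto.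
Qed.
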